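(* Let $G\in\mathbb C^{N\times N}$ be Hermitian positive definite, let $A\in\mathbb C^{N\times N}$ satisfy $GA=A^*G$, and let $B\in\mathbb C^{N\times N}$ satisfy $GB=B^*G\ge0$. Let $C_A,C_B$ be constants with $\|A\|_G\le C_A$ and $\|B\|_G\le C_B$. Suppose that for some $\alpha>0$ there exists $\beta>0$ with $$GB+\frac1{\alpha^2}A^*GBA\ge\beta G.$$ Then there exists $\delta>0$, depending only on $\alpha,\beta,C_A,C_B$, such that $$\lim_{T\to\infty}\frac1{2T}\int_{-T}^Te^{itA^*}GBe^{-itA}\,dt\ge\delta G$$ (the limit exists).
   Context: For Hermitian matrices $M_1,M_2$, $M_1\ge M_2$ means $M_1-M_2$ is positive semidefinite. $\|M\|_G$ denotes the operator norm of $M$ with respect to the norm $v\mapsto(v^*Gv)^{1/2}$ on $\mathbb C^N$. *)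

(* classical reals, complex numbers as pairs of reals,
   N x N complex matrices as functions nat -> nat -> C (only indices < N matter). *)
From Stdlib Require Import Reals Lra List Arith ClassicalEpsilon.
Open Scope R_scope.

Record C := mkC { re : R ; im : R }.
Definition C0 : C := mkC 0 0.
Definition C1 : C := mkC 1 0.
Definition Ci : C := mkC 0 1.
Definition Cadd (x y : C) : C := mkC (re x + re y) (im x + im y).
Definition Copp (x : C) : C := mkC (- re x) (- im x).
Definition Cmul (x y : C) : C :=
  mkC (re x * re y - im x * im y) (re x * im y + im x * re y).
Definition Cconj (x : C) : C := mkC (re x) (- im x).
Definition RtoC (r : R) : C := mkC r 0.

Definition csum (n : nat) (f : nat -> C) : C :=
  fold_right Cadd C0 (map f (seq 0 n)).

Definition Mat := nat -> nat -> C.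
Definition Vec := nat -> C.

Definition madd (M1 M2 : Mat) : Mat := fun i j => Cadd (M1 i j) (M2 i j).
Definition msub (M1 M2 : Mat) : Mat := fun i j => Cadd (M1 i j) (Copp (M2 i j)).
Definition mscale (c : C) (M : Mat) : Mat := fun i j => Cmul c (M i j).
Definition mmul (N : nat) (M1 M2 : Mat) : Mat :=
  fun i j => csum N (fun k => Cmul (M1 i k) (M2 k j)).
Definition madj (M : Mat) : Mat := fun i j => Cconj (M j i).
Definition mid : Mat := fun i j => if Nat.eqb i j then C1 else C0.
Definition mvec (N : nat) (M : Mat) (v : Vec) : Vec :=
  fun i => csum N (fun k => Cmul (M i k) (v k)).

Definition meq (N : nat) (M1 M2 : Mat) : Prop :=
  forall i j, (i < N)%nat -> (j < N)%nat -> M1 i j = M2 i j.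

Definition hermitian (N : nat) (M : Mat) : Prop := meq N M (madj M).

Definition quad (N : nat) (M : Mat) (v : Vec) : C :=
  csum N (fun i => Cmul (Cconj (v i)) (mvec N M v i)).

Definition psd (N : nat) (M : Mat) : Prop :=
  hermitian N M /\ forall v : Vec, 0 <= re (quad N M v).

Definition hpd (N : nat) (M : Mat) : Prop :=
  hermitian N M /\
  forall v : Vec, (exists i, (i < N)%nat /\ v i <> C0) -> 0 < re (quad N M v).

Definition mge (N : nat) (M1 M2 : Mat) : Prop := psd N (msub M1 M2).

Definition Gnormv (N : nat) (G : Mat) (v : Vec) : R := sqrt (re (quad N G v)).

(* ||M||_G <= c, i.e. the operator norm wrt the G-norm (a supremum) is <= c *)
Definition Gopnorm_le (N : nat) (G M : Mat) (c : R) : Prop :=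
  forall v : Vec, Gnormv N G (mvec N M v) <= c * Gnormv N G v.

Fixpoint mpow (N : nat) (M : Mat) (k : nat) : Mat :=
  match k with
  | O => mid
  | S k' => mmul N M (mpow N M k')
  end.

Fixpoint mexp_partial (N : nat) (M : Mat) (n : nat) : Mat :=
  match n with
  | O => mid
  | S n' => madd (mexp_partial N M n')
                 (mscale (RtoC (/ INR (Factorial.fact (S n')))) (mpow N M (S n')))
  end.

Definition Rlim (u : nat -> R) : R := epsilon (inhabits 0) (fun l => Un_cv u l).

Definition mexp (N : nat) (M : Mat) : Mat :=
  fun i j => mkC (Rlim (fun n => re (mexp_partial N M n i j)))
                 (Rlim (fun n => im (mexp_partial N M n i j))).

Definition Rint (g : R -> R) (a b : R) : R :=
  epsilon (inhabits 0) (fun I => exists pr : Riemann_integrable g a b, RiemannInt pr = I).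

Definition integrand (N : nat) (G A B : Mat) (t : R) : Mat :=
  mmul N (mexp N (mscale (mkC 0 t) (madj A)))
         (mmul N (mmul N G B) (mexp N (mscale (mkC 0 (- t)) A))).

Definition time_average_is (N : nat) (F : R -> Mat) (L : Mat) : Prop :=
  (forall T, 0 < T -> forall i j, (i < N)%nat -> (j < N)%nat ->
     inhabited (Riemann_integrable (fun t => re (F t i j)) (- T) T) /\
     inhabited (Riemann_integrable (fun t => im (F t i j)) (- T) T)) /\
  (forall eps, 0 < eps -> exists T0, 0 < T0 /\ forall T, T0 <= T ->
     forall i j, (i < N)%nat -> (j < N)%nat ->
       Rabs (Rint (fun t => re (F t i j)) (- T) T / (2 * T) - re (L i j)) < eps /\
       Rabs (Rint (fun t => im (F t i j)) (- T) T / (2 * T) - im (L i j)) < eps).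

(* Because G A = A^* G, the matrix A is self-adjoint for the inner
   product <x,y>_G = x^* G y.  Hence it has a G-orthonormal eigenbasis v_0..v_{N-1}
   with real eigenvalues λ_k, and |λ_k| <= C_A.  The eigenbasis is built one vector
   at a time: on the G-orthogonal complement of the vectors already found, the
   Rayleigh quotient <x,Ax>_G / <x,x>_G attains its supremum (compactness), and the
   first-order condition at a maximiser says that it is an eigenvector.
   In this basis e^{-itA} = Σ_k e^{-itλ_k} v_k (G v_k)^*, so every entry of the
   integrand is a trigonometric polynomial Σ_{k,l} c_{kl} e^{i(λ_k-λ_l)t}.  Its
   average over [-T,T] converges, at rate O(1/T), to the sum L of the terms with
   λ_k = λ_l.  Grouping indices by eigenvalue, x^* L x = Σ_μ (P_μ x)^* GB (P_μ x)
   where P_μ is the G-orthogonal projection onto the μ-eigenspace, while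
   x^* G x = Σ_μ (P_μ x)^* G (P_μ x).  On the μ-eigenspace A acts as μ, so the
   hypothesis gives β |P_μ x|_G^2 <= (1 + C_A^2/α^2) (P_μ x)^* GB (P_μ x); summing
   over μ yields L >= δ G with δ = β / (1 + C_A^2/α^2). *)

From Pilot Require Import Defs.
From Stdlib Require Import Reals Lra Lia List ZArith.
From Stdlib Require Import ClassicalEpsilon Classical Rtopology RiemannInt FunctionalExtensionality.
(* Re-import the definitions so that [C] denotes the complex numbers, not the binomial. *)
Import Defs.
Open Scope R_scope.

(** * Complex arithmetic *)

Lemma C_ext (x y : C) : re x = re y -> im x = im y -> x = y.
Proof. destruct x, y; simpl; intros; subst; reflexivity. Qed.

Ltac cunf := unfold Cadd, Cmul, Copp, Cconj, RtoC, C0, C1, Ci in *.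
Ltac cring := apply C_ext; cunf; simpl; ring.

Lemma Cadd_0_l x : Cadd C0 x = x. Proof. cring. Qed.
Lemma Cadd_0_r x : Cadd x C0 = x. Proof. cring. Qed.
Lemma Cadd_assoc x y z : Cadd x (Cadd y z) = Cadd (Cadd x y) z. Proof. cring. Qed.
Lemma Cmul_comm x y : Cmul x y = Cmul y x. Proof. cring. Qed.
Lemma Cmul_assoc x y z : Cmul x (Cmul y z) = Cmul (Cmul x y) z. Proof. cring. Qed.
Lemma Cmul_1_l x : Cmul C1 x = x. Proof. cring. Qed.
Lemma Cmul_1_r x : Cmul x C1 = x. Proof. cring. Qed.
Lemma Cconj_add x y : Cconj (Cadd x y) = Cadd (Cconj x) (Cconj y). Proof. cring. Qed.
Lemma Cconj_mul x y : Cconj (Cmul x y) = Cmul (Cconj x) (Cconj y). Proof. cring. Qed.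
Lemma Cconj_conj x : Cconj (Cconj x) = x. Proof. cring. Qed.

Lemma C_sqnorm_neq0 x : x <> C0 -> re x * re x + im x * im x <> 0.
Proof.
  intros H E. apply H. destruct x as [a b]; simpl in *.
  assert (a = 0) by nra. assert (b = 0) by nra. subst; reflexivity.
Qed.

Definition Cinv (x : C) : C :=
  mkC (re x / (re x * re x + im x * im x)) (- im x / (re x * re x + im x * im x)).

Lemma Cmul_inv_r x : x <> C0 -> Cmul x (Cinv x) = C1.
Proof.
  intros H. pose proof (C_sqnorm_neq0 x H).
  apply C_ext; unfold Cmul, Cinv, C1; simpl; field; auto.
Qed.

Lemma Cmul_eq0 x y : Cmul x y = C0 -> x = C0 \/ y = C0.
Proof.
  intros H. destruct (classic (x = C0)); auto. right.
  rewrite <- (Cmul_1_l y), <- (Cmul_inv_r x), (Cmul_comm x) by auto.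
  rewrite <- Cmul_assoc, H. cring.
Qed.

Lemma fold_Cadd_app (l1 l2 : list C) :
  fold_right Cadd C0 (l1 ++ l2) = Cadd (fold_right Cadd C0 l1) (fold_right Cadd C0 l2).
Proof.
  induction l1; simpl.
  - now rewrite Cadd_0_l.
  - rewrite IHl1. apply Cadd_assoc.
Qed.

Lemma csum_S n f : csum (S n) f = Cadd (csum n f) (f n).
Proof.
  unfold csum. rewrite seq_S, map_app, fold_Cadd_app. simpl. now rewrite Cadd_0_r.
Qed.

Lemma csum_ext n f g : (forall k, (k < n)%nat -> f k = g k) -> csum n f = csum n g.
Proof.
  induction n; intros H; [reflexivity|].
  rewrite !csum_S, IHn, H; auto; intros; apply H; lia.
Qed.

Lemma csum_add n f g : csum n (fun k => Cadd (f k) (g k)) = Cadd (csum n f) (csum n g).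
Proof. induction n; [cring|]. rewrite !csum_S, IHn. cring. Qed.

Lemma csum_mull n c f : Cmul c (csum n f) = csum n (fun k => Cmul c (f k)).
Proof. induction n; [cring|]. rewrite !csum_S, <- IHn. cring. Qed.

Lemma csum_mulr n c f : Cmul (csum n f) c = csum n (fun k => Cmul (f k) c).
Proof. induction n; [cring|]. rewrite !csum_S, <- IHn. cring. Qed.

Lemma csum_conj n f : Cconj (csum n f) = csum n (fun k => Cconj (f k)).
Proof. induction n; [cring|]. rewrite !csum_S, <- IHn. cring. Qed.

Lemma csum_opp n f : Copp (csum n f) = csum n (fun k => Copp (f k)).
Proof. induction n; [cring|]. rewrite !csum_S, <- IHn. cring. Qed.

Lemma csum_zero n f : (forall k, (k < n)%nat -> f k = C0) -> csum n f = C0.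
Proof.
  intros H; rewrite (csum_ext n f (fun _ => C0)); auto. clear H.
  induction n; auto. rewrite csum_S, IHn. cring.
Qed.

Lemma csum_swap n m f :
  csum n (fun i => csum m (fun j => f i j)) = csum m (fun j => csum n (fun i => f i j)).
Proof.
  induction n.
  - symmetry; apply csum_zero; auto.
  - rewrite csum_S, IHn, <- csum_add. apply csum_ext; intros. now rewrite csum_S.
Qed.

Definition kron (j l : nat) : C := if Nat.eqb j l then C1 else C0.

Lemma kron_refl j : kron j j = C1. Proof. unfold kron; now rewrite Nat.eqb_refl. Qed.
Lemma kron_neq j l : j <> l -> kron j l = C0.
Proof. intros H; unfold kron; destruct (Nat.eqb_spec j l); auto; lia. Qed.

Lemma csum_kron n j (c : nat -> C) : (j < n)%nat -> csum n (fun k => Cmul (kron j k) (c k)) = c j.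
Proof.
  induction n; intros H; [lia|]. rewrite csum_S.
  destruct (Nat.eq_dec j n) as [->|Hjn].
  - rewrite csum_zero, kron_refl; [cring|]. intros k Hk. rewrite kron_neq by lia. cring.
  - rewrite IHn, kron_neq by lia. cring.
Qed.

Fixpoint rsum (n : nat) (f : nat -> R) : R :=
  match n with O => 0 | S n' => rsum n' f + f n' end.

Lemma re_csum n f : re (csum n f) = rsum n (fun k => re (f k)).
Proof. induction n; [reflexivity|]. rewrite csum_S; simpl; rewrite <- IHn; reflexivity. Qed.
Lemma im_csum n f : im (csum n f) = rsum n (fun k => im (f k)).
Proof. induction n; [reflexivity|]. rewrite csum_S; simpl; rewrite <- IHn; reflexivity. Qed.

Lemma rsum_ext n f g : (forall k, (k < n)%nat -> f k = g k) -> rsum n f = rsum n g.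
Proof. induction n; intros H; simpl; auto. rewrite IHn, H; auto; intros; apply H; lia. Qed.

Lemma rsum_le n f g : (forall k, (k < n)%nat -> f k <= g k) -> rsum n f <= rsum n g.
Proof.
  induction n; intros H; simpl; [lra|].
  assert (f n <= g n) by (apply H; lia).
  assert (rsum n f <= rsum n g) by (apply IHn; intros; apply H; lia). lra.
Qed.

Lemma rsum_zero n f : (forall k, (k < n)%nat -> f k = 0) -> rsum n f = 0.
Proof. induction n; intros H; simpl; auto. rewrite IHn, H; auto; try lra; intros; apply H; lia. Qed.

Lemma rsum_nonneg n f : (forall k, (k < n)%nat -> 0 <= f k) -> 0 <= rsum n f.
Proof.
  intros H. rewrite <- (rsum_zero n (fun _ => 0)) by auto. apply rsum_le; auto.
Qed.

Lemma rsum_scal n c f : rsum n (fun k => c * f k) = c * rsum n f.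
Proof. induction n; simpl; [ring|]. rewrite IHn; ring. Qed.

Lemma rsum_minus n f g : rsum n f - rsum n g = rsum n (fun k => f k - g k).
Proof. induction n; simpl; [ring|]. rewrite <- IHn; ring. Qed.

Lemma rsum_div n f c : rsum n f / c = rsum n (fun k => f k / c).
Proof. induction n; simpl. unfold Rdiv; ring. rewrite <- IHn. unfold Rdiv; ring. Qed.

Lemma rsum_term_le n f k : (k < n)%nat -> (forall j, (j < n)%nat -> 0 <= f j) -> f k <= rsum n f.
Proof.
  induction n; intros Hk H; [lia|]. simpl.
  assert (0 <= f n) by (apply H; lia).
  destruct (Nat.eq_dec k n) as [->|Hkn].
  - assert (0 <= rsum n f) by (apply rsum_nonneg; intros; apply H; lia). lra.
  - assert (f k <= rsum n f) by (apply IHn; [lia| intros; apply H; lia]). lra.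
Qed.

(** * Vectors and sesquilinear forms *)

Definition vadd (x y : Vec) : Vec := fun i => Cadd (x i) (y i).
Definition vscale (c : C) (x : Vec) : Vec := fun i => Cmul c (x i).
Definition ip (N : nat) (M : Mat) (x y : Vec) : C :=
  csum N (fun i => Cmul (Cconj (x i)) (mvec N M y i)).
Definition dot (N : nat) (x y : Vec) : C := csum N (fun i => Cmul (Cconj (x i)) (y i)).

Lemma quad_ip N M v : quad N M v = ip N M v v. Proof. reflexivity. Qed.
Lemma ip_dot N M x y : ip N M x y = dot N x (mvec N M y). Proof. reflexivity. Qed.

Lemma mvec_ext N M v w i : (forall k, (k < N)%nat -> v k = w k) -> mvec N M v i = mvec N M w i.
Proof. intros H; unfold mvec; apply csum_ext; intros; now rewrite H. Qed.

Lemma mvec_mext N M1 M2 v i :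
  (forall k, (k < N)%nat -> M1 i k = M2 i k) -> mvec N M1 v i = mvec N M2 v i.
Proof. intros H; unfold mvec; apply csum_ext; intros; now rewrite H. Qed.

Lemma mvec_mmul N M1 M2 v i : mvec N (mmul N M1 M2) v i = mvec N M1 (mvec N M2 v) i.
Proof.
  unfold mvec, mmul.
  rewrite (csum_ext N _ (fun k => csum N (fun j => Cmul (M1 i j) (Cmul (M2 j k) (v k))))).
  2:{ intros. rewrite csum_mulr. apply csum_ext; intros; cring. }
  rewrite csum_swap. apply csum_ext; intros. rewrite csum_mull. reflexivity.
Qed.

Lemma mvec_vadd N M x y i : mvec N M (vadd x y) i = Cadd (mvec N M x i) (mvec N M y i).
Proof. unfold mvec, vadd. rewrite <- csum_add. apply csum_ext; intros; cring. Qed.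
Lemma mvec_vscale N M c x i : mvec N M (vscale c x) i = Cmul c (mvec N M x i).
Proof. unfold mvec, vscale. rewrite csum_mull. apply csum_ext; intros; cring. Qed.
Lemma mvec_madd N M1 M2 x i : mvec N (madd M1 M2) x i = Cadd (mvec N M1 x i) (mvec N M2 x i).
Proof. unfold mvec, madd. rewrite <- csum_add. apply csum_ext; intros; cring. Qed.
Lemma mvec_msub N M1 M2 x i :
  mvec N (msub M1 M2) x i = Cadd (mvec N M1 x i) (Copp (mvec N M2 x i)).
Proof. unfold mvec, msub. rewrite csum_opp, <- csum_add. apply csum_ext; intros; cring. Qed.
Lemma mvec_mscale N c M x i : mvec N (mscale c M) x i = Cmul c (mvec N M x i).
Proof. unfold mvec, mscale. rewrite csum_mull. apply csum_ext; intros; cring. Qed.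

Lemma mvec_zero N M x i : (forall k, (k < N)%nat -> x k = C0) -> mvec N M x i = C0.
Proof. intros H; unfold mvec; apply csum_zero; intros; rewrite H; auto; cring. Qed.

Lemma mvec_csum N M m (c : nat -> C) (u : nat -> Vec) i :
  mvec N M (fun i => csum m (fun k => Cmul (c k) (u k i))) i
  = csum m (fun k => Cmul (c k) (mvec N M (u k) i)).
Proof.
  induction m.
  - apply mvec_zero. intros; reflexivity.
  - rewrite csum_S, <- IHm, <- mvec_vscale, <- mvec_vadd.
    apply mvec_ext. intros; unfold vadd, vscale; rewrite csum_S; reflexivity.
Qed.

Lemma dot_madj N M x y : dot N x (mvec N (madj M) y) = dot N (mvec N M x) y.
Proof.
  unfold dot, mvec, madj.
  rewrite (csum_ext N _ (fun i => csum N (fun k => Cmul (Cconj (x i)) (Cmul (Cconj (M k i)) (y k))))).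
  2:{ intros; apply csum_mull. }
  rewrite csum_swap. apply csum_ext; intros k Hk.
  rewrite csum_conj, csum_mulr. apply csum_ext; intros; cring.
Qed.

Lemma dot_ext N x x' y y' :
  (forall k, (k < N)%nat -> x k = x' k) -> (forall k, (k < N)%nat -> y k = y' k) ->
  dot N x y = dot N x' y'.
Proof. intros H1 H2; unfold dot; apply csum_ext; intros; rewrite H1, H2; auto. Qed.

Lemma dot_vscale N c x y : dot N (vscale c x) (vscale c y) = Cmul (Cmul (Cconj c) c) (dot N x y).
Proof. unfold dot, vscale. rewrite csum_mull. apply csum_ext; intros; cring. Qed.

Lemma ip_ext N M x x' y y' :
  (forall k, (k < N)%nat -> x k = x' k) -> (forall k, (k < N)%nat -> y k = y' k) ->
  ip N M x y = ip N M x' y'.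
Proof.
  intros H1 H2; unfold ip; apply csum_ext; intros; rewrite H1; auto.
  f_equal. apply mvec_ext; auto.
Qed.

Lemma ip_vadd_r N M x y z : ip N M x (vadd y z) = Cadd (ip N M x y) (ip N M x z).
Proof. unfold ip. rewrite <- csum_add. apply csum_ext; intros; rewrite mvec_vadd; cring. Qed.
Lemma ip_vadd_l N M x y z : ip N M (vadd x y) z = Cadd (ip N M x z) (ip N M y z).
Proof. unfold ip. rewrite <- csum_add. apply csum_ext; intros; unfold vadd; cring. Qed.
Lemma ip_vscale_r N M c x y : ip N M x (vscale c y) = Cmul c (ip N M x y).
Proof. unfold ip. rewrite csum_mull. apply csum_ext; intros; rewrite mvec_vscale; cring. Qed.
Lemma ip_vscale_l N M c x y : ip N M (vscale c x) y = Cmul (Cconj c) (ip N M x y).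
Proof. unfold ip. rewrite csum_mull. apply csum_ext; intros; unfold vscale; cring. Qed.

Lemma ip_zero_l N M x y : (forall i, (i < N)%nat -> x i = C0) -> ip N M x y = C0.
Proof. intros H; unfold ip; apply csum_zero; intros; rewrite H; auto; cring. Qed.
Lemma ip_zero_r N M x y : (forall i, (i < N)%nat -> y i = C0) -> ip N M x y = C0.
Proof. intros H; unfold ip; apply csum_zero; intros; rewrite mvec_zero; auto; cring. Qed.

Lemma ip_csum_r N M v m (c : nat -> C) (u : nat -> Vec) :
  ip N M v (fun i => csum m (fun k => Cmul (c k) (u k i)))
  = csum m (fun k => Cmul (c k) (ip N M v (u k))).
Proof.
  induction m.
  - apply ip_zero_r. intros; reflexivity.
  - rewrite csum_S, <- IHm, <- ip_vscale_r, <- ip_vadd_r.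
    apply ip_ext; auto. intros; unfold vadd, vscale; rewrite csum_S; reflexivity.
Qed.

Lemma ip_csum_l N M w m (c : nat -> C) (u : nat -> Vec) :
  ip N M (fun i => csum m (fun k => Cmul (c k) (u k i))) w
  = csum m (fun k => Cmul (Cconj (c k)) (ip N M (u k) w)).
Proof.
  induction m.
  - apply ip_zero_l. intros; reflexivity.
  - rewrite csum_S, <- IHm, <- ip_vscale_l, <- ip_vadd_l.
    apply ip_ext; auto. intros; unfold vadd, vscale; rewrite csum_S; reflexivity.
Qed.

Lemma quad_expand N M m (a : nat -> C) (u : nat -> Vec) :
  quad N M (fun i => csum m (fun k => Cmul (a k) (u k i))) =
  csum m (fun k => csum m (fun l => Cmul (Cmul (Cconj (a k)) (a l)) (ip N M (u k) (u l)))).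
Proof.
  rewrite quad_ip, ip_csum_l. apply csum_ext; intros k Hk. rewrite ip_csum_r, csum_mull.
  apply csum_ext; intros; cring.
Qed.

Lemma quad_vext N M x y : (forall i, (i < N)%nat -> x i = y i) -> quad N M x = quad N M y.
Proof. intros H. rewrite !quad_ip. apply ip_ext; auto. Qed.

Lemma quad_madd N M1 M2 x : quad N (madd M1 M2) x = Cadd (quad N M1 x) (quad N M2 x).
Proof. unfold quad. rewrite <- csum_add. apply csum_ext; intros; rewrite mvec_madd; cring. Qed.
Lemma quad_msub N M1 M2 x : quad N (msub M1 M2) x = Cadd (quad N M1 x) (Copp (quad N M2 x)).
Proof. unfold quad. rewrite csum_opp, <- csum_add. apply csum_ext; intros; rewrite mvec_msub; cring. Qed.
Lemma re_quad_mscale N r M x :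
  re (quad N (mscale (RtoC r) M) x) = r * re (quad N M x) - 0 * im (quad N M x).
Proof.
  unfold quad. rewrite (csum_ext N _ (fun i => Cmul (RtoC r) (Cmul (Cconj (x i)) (mvec N M x i)))).
  - rewrite <- csum_mull. reflexivity.
  - intros; rewrite mvec_mscale; cring.
Qed.

Lemma quad_vscale N M r x : re (quad N M (vscale (RtoC r) x)) = r * r * re (quad N M x).
Proof. rewrite !quad_ip, ip_vscale_l, ip_vscale_r. cunf; simpl. ring. Qed.

Lemma quad_sandwich N A G B x :
  quad N (mmul N (mmul N (mmul N (madj A) G) B) A) x = quad N (mmul N G B) (mvec N A x).
Proof.
  rewrite !quad_ip, !ip_dot.
  rewrite (dot_ext N x x _ (mvec N (madj A) (mvec N (mmul N G B) (mvec N A x)))); auto.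
  2:{ intros k Hk. rewrite !mvec_mmul. apply mvec_ext; intros j Hj. rewrite !mvec_mmul. reflexivity. }
  apply dot_madj.
Qed.

Lemma herm_ip_conj N M x y : hermitian N M -> Cconj (ip N M x y) = ip N M y x.
Proof.
  intros H. rewrite !ip_dot.
  rewrite (dot_ext N y y (mvec N M x) (mvec N (madj M) x)); auto.
  2:{ intros k Hk. apply mvec_mext; intros j Hj. apply H; auto. }
  rewrite dot_madj. unfold dot. rewrite csum_conj. apply csum_ext; intros; cring.
Qed.

Lemma herm_quad_real N M x : hermitian N M -> im (quad N M x) = 0.
Proof.
  intros H. pose proof (herm_ip_conj N M x x H) as E. rewrite <- quad_ip in E.
  destruct (quad N M x) as [a b]; unfold Cconj in E; simpl in *. injection E; lra.
Qed.

Lemma selfadj_ip N G A x y : meq N (mmul N G A) (mmul N (madj A) G) ->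
  ip N G x (mvec N A y) = ip N G (mvec N A x) y.
Proof.
  intros H. rewrite !ip_dot.
  rewrite (dot_ext N x x _ (mvec N (madj A) (mvec N G y))); auto.
  2:{ intros k Hk. rewrite <- !mvec_mmul. apply mvec_mext; intros; apply H; auto. }
  apply dot_madj.
Qed.

Lemma selfadj_ip_real N G A x : hermitian N G -> meq N (mmul N G A) (mmul N (madj A) G) ->
  im (ip N G x (mvec N A x)) = 0.
Proof.
  intros HG HA. pose proof (herm_ip_conj N G x (mvec N A x) HG) as E.
  rewrite <- (selfadj_ip N G A x x HA) in E.
  destruct (ip N G x (mvec N A x)) as [a b]; unfold Cconj in E; simpl in *. injection E; lra.
Qed.

(* Enumeration of the indices < S m other than j0. *)
Definition skip (j0 j' : nat) : nat := if Nat.ltb j' j0 then j' else S j'.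

Lemma skip_onto j0 m j : (j < S m)%nat -> j <> j0 -> (j0 < S m)%nat ->
  exists j', (j' < m)%nat /\ skip j0 j' = j.
Proof.
  intros Hj Hne Hj0. unfold skip. destruct (Nat.ltb_spec j j0) as [Hlt|Hge].
  - exists j. split; [lia|]. destruct (Nat.ltb_spec j j0); lia.
  - exists (pred j). split; [lia|]. destruct (Nat.ltb_spec (pred j) j0); lia.
Qed.

(* Gaussian elimination step: if equation j0 has a nonzero coefficient on the last
   unknown n, a solution of the system in which that unknown has been eliminated
   extends to a solution of the full system. *)
Lemma eliminate_last_unknown n m (a : nat -> nat -> C) j0 (y : Vec) :
  (j0 < S m)%nat -> a j0 n <> C0 ->
  (forall j', (j' < m)%nat ->
     csum n (fun i => Cmul (Cadd (a (skip j0 j') i)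
                  (Copp (Cmul (a (skip j0 j') n) (Cmul (a j0 i) (Cinv (a j0 n)))))) (y i)) = C0) ->
  exists t, forall j, (j < S m)%nat ->
    csum (S n) (fun i => Cmul (a j i) (if Nat.eqb i n then t else y i)) = C0.
Proof.
  intros Hj0 Hpiv Hred.
  set (S0 := csum n (fun i => Cmul (a j0 i) (y i))).
  exists (Copp (Cmul S0 (Cinv (a j0 n)))). intros j Hj.
  rewrite csum_S, Nat.eqb_refl.
  rewrite (csum_ext n _ (fun i => Cmul (a j i) (y i))).
  2:{ intros k Hk. destruct (Nat.eqb_spec k n); [lia|auto]. }
  destruct (Nat.eq_dec j j0) as [->|Hjj].
  - fold S0. rewrite <- (Cmul_1_r S0) at 1. rewrite <- (Cmul_inv_r (a j0 n) Hpiv). cring.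
  - destruct (skip_onto j0 m j Hj Hjj Hj0) as [j' [Hj' Hsk]].
    pose proof (Hred j' Hj') as E. rewrite Hsk in E.
    rewrite (csum_ext n _ (fun i => Cadd (Cmul (a j i) (y i))
         (Cmul (Copp (Cmul (a j n) (Cinv (a j0 n)))) (Cmul (a j0 i) (y i))))) in E
      by (intros; cring).
    rewrite csum_add, <- csum_mull in E. fold S0 in E.
    rewrite <- E. cring.
Qed.

Definition unitv (p : nat) : Vec := fun i => kron i p.

Lemma unitv_nonzero n p : (p < n)%nat -> exists i, (i < n)%nat /\ unitv p i <> C0.
Proof.
  intros Hp. exists p. split; auto. unfold unitv. rewrite kron_refl.
  intro E. injection E; lra.
Qed.

Lemma csum_unitv n p (c : nat -> C) : (p < n)%nat -> csum n (fun i => Cmul (c i) (unitv p i)) = c p.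
Proof.
  intros H. rewrite <- (csum_kron n p c H). apply csum_ext; intros k Hk.
  unfold unitv, kron. rewrite Nat.eqb_sym. cring.
Qed.

Lemma homogeneous_nontrivial : forall n m (a : nat -> nat -> C), (m < n)%nat ->
  exists x : Vec, (exists i, (i < n)%nat /\ x i <> C0) /\
    forall j, (j < m)%nat -> csum n (fun i => Cmul (a j i) (x i)) = C0.
Proof.
  induction n as [|n IH]; intros m a Hm; [lia|].
  destruct m as [|m].
  { exists (unitv 0). split; [apply unitv_nonzero; lia | intros; lia]. }
  destruct (classic (exists j0, (j0 < S m)%nat /\ a j0 n <> C0)) as [[j0 [Hj0 Hpiv]]|Hno].
  - destruct (IH m (fun j' i => Cadd (a (skip j0 j') i)
                 (Copp (Cmul (a (skip j0 j') n) (Cmul (a j0 i) (Cinv (a j0 n)))))) ltac:(lia))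
      as [y [[i0 [Hi0 Hyi0]] Hy]].
    destruct (eliminate_last_unknown n m a j0 y Hj0 Hpiv Hy) as [t Ht].
    exists (fun i => if Nat.eqb i n then t else y i). split; auto.
    exists i0. split; [lia|]. destruct (Nat.eqb_spec i0 n); [lia|auto].
  - exists (unitv n). split; [apply unitv_nonzero; lia|].
    intros j Hj. rewrite csum_unitv by lia.
    destruct (classic (a j n = C0)); auto. exfalso; apply Hno; eauto.
Qed.

Definition Ccv (u : nat -> C) (l : C) : Prop :=
  Un_cv (fun n => re (u n)) (re l) /\ Un_cv (fun n => im (u n)) (im l).

Lemma Un_cv_const c : Un_cv (fun _ => c) c.
Proof. intros e He. exists 0%nat. intros. unfold Rdist. rewrite Rminus_diag, Rabs_R0; auto. Qed.

Lemma Un_cv_ext u v l : (forall n, u n = v n) -> Un_cv u l -> Un_cv v l.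
Proof. intros E H e He. destruct (H e He) as [M HM]. exists M. intros; rewrite <- E; auto. Qed.

Lemma Un_cv_const_unique u c l : (forall n, u n = c) -> Un_cv u l -> l = c.
Proof.
  intros E H. apply (UL_sequence u); auto.
  eapply Un_cv_ext; [|apply (Un_cv_const c)]. intros; auto.
Qed.

Lemma Ccv_const c : Ccv (fun _ => c) c.
Proof. split; apply Un_cv_const. Qed.

Lemma Ccv_ext u v a : (forall n, u n = v n) -> Ccv u a -> Ccv v a.
Proof. intros E [H1 H2]; split; eapply Un_cv_ext; eauto; intros; simpl; rewrite E; auto. Qed.

Lemma Ccv_const_unique u c l : (forall n, u n = c) -> Ccv u l -> l = c.
Proof.
  intros E [H1 H2]. apply C_ext.
  - apply (Un_cv_const_unique (fun n => re (u n))); auto; intros; rewrite E; auto.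
  - apply (Un_cv_const_unique (fun n => im (u n))); auto; intros; rewrite E; auto.
Qed.

Lemma Ccv_add u v a b : Ccv u a -> Ccv v b -> Ccv (fun n => Cadd (u n) (v n)) (Cadd a b).
Proof. intros [H1 H2] [H3 H4]; split; simpl; apply CV_plus; auto. Qed.

Lemma Ccv_conj u a : Ccv u a -> Ccv (fun n => Cconj (u n)) (Cconj a).
Proof. intros [H1 H2]; split; simpl; auto. apply CV_opp; auto. Qed.

Lemma Ccv_mul u v a b : Ccv u a -> Ccv v b -> Ccv (fun n => Cmul (u n) (v n)) (Cmul a b).
Proof.
  intros [H1 H2] [H3 H4]; split; simpl.
  - apply CV_minus; apply CV_mult; auto.
  - apply CV_plus; apply CV_mult; auto.
Qed.

Lemma Ccv_csum m (u : nat -> nat -> C) (a : nat -> C) :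
  (forall k, (k < m)%nat -> Ccv (fun n => u n k) (a k)) ->
  Ccv (fun n => csum m (u n)) (csum m a).
Proof.
  induction m; intros H.
  - exact (Ccv_const C0).
  - rewrite csum_S. apply (Ccv_ext (fun n => Cadd (csum m (u n)) (u n m))).
    + intros; now rewrite csum_S.
    + apply Ccv_add; auto.
Qed.

Definition vcv N (xs : nat -> Vec) (y : Vec) :=
  forall k, (k < N)%nat -> Ccv (fun n => xs n k) (y k).

Lemma vcv_const N x : vcv N (fun _ => x) x.
Proof. intros k Hk; apply Ccv_const. Qed.

Lemma vcv_mvec N M xs y : vcv N xs y -> vcv N (fun n => mvec N M (xs n)) (mvec N M y).
Proof.
  intros H i Hi. unfold mvec. apply (Ccv_csum N (fun n k => Cmul (M i k) (xs n k))).
  intros; apply Ccv_mul; auto. apply Ccv_const.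
Qed.

Lemma Ccv_dot N xs ys x y : vcv N xs x -> vcv N ys y ->
  Ccv (fun n => dot N (xs n) (ys n)) (dot N x y).
Proof.
  intros H1 H2. unfold dot. apply (Ccv_csum N (fun n k => Cmul (Cconj (xs n k)) (ys n k))).
  intros; apply Ccv_mul; auto. apply Ccv_conj; auto.
Qed.

Lemma Ccv_ip N M xs ys x y : vcv N xs x -> vcv N ys y ->
  Ccv (fun n => ip N M (xs n) (ys n)) (ip N M x y).
Proof. intros H1 H2. apply Ccv_dot; auto. apply vcv_mvec; auto. Qed.

Definition incr (phi : nat -> nat) := forall n, (phi n < phi (S n))%nat.

Lemma incr_ge phi : incr phi -> forall n, (n <= phi n)%nat.
Proof. intros H n; induction n; [lia|]. specialize (H n); lia. Qed.

Lemma incr_mono phi : incr phi -> forall n m, (n <= m)%nat -> (phi n <= phi m)%nat.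
Proof. intros H n m Hnm; induction Hnm; auto. specialize (H m); lia. Qed.

Lemma incr_comp phi psi : incr phi -> incr psi -> incr (fun n => phi (psi n)).
Proof.
  intros H1 H2 n. pose proof (incr_mono phi H1 (S (psi n)) (psi (S n)) (H2 n)).
  specialize (H1 (psi n)). lia.
Qed.

Lemma cv_subseq u l phi : incr phi -> Un_cv u l -> Un_cv (fun n => u (phi n)) l.
Proof.
  intros Hp H e He. destruct (H e He) as [M HM]. exists M. intros n Hn.
  apply HM. pose proof (incr_ge phi Hp n); lia.
Qed.

Lemma Ccv_subseq u a phi : incr phi -> Ccv u a -> Ccv (fun n => u (phi n)) a.
Proof.
  intros Hp [H1 H2]; split;
    [apply (cv_subseq (fun n => re (u n))) | apply (cv_subseq (fun n => im (u n)))]; auto.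
Qed.

Lemma archi_inv_nat e : 0 < e -> exists K : nat, / INR (S K) < e.
Proof.
  intros He. destruct (archimed (/ e)) as [Ha _].
  assert (H0 : (0 <= up (/ e))%Z). { apply le_IZR. pose proof (Rinv_0_lt_compat e He). lra. }
  exists (Z.to_nat (up (/ e))).
  rewrite S_INR, INR_IZR_INZ, Z2Nat.id by auto.
  assert (0 < / e) by (apply Rinv_0_lt_compat; auto).
  set (X := IZR (up (/ e))) in *.
  apply Rlt_le_trans with (/ / e). apply Rinv_lt_contravar; nra. rewrite Rinv_inv; lra.
Qed.

Lemma inv_S_cv : Un_cv (fun n => / INR (S n)) 0.
Proof.
  intros e He. destruct (archi_inv_nat e He) as [K HK]. exists K. intros n Hnn. unfold Rdist.
  rewrite Rminus_0_r, Rabs_right.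
  - apply Rle_lt_trans with (/ INR (S K)); auto.
    apply Rinv_le_contravar. apply lt_0_INR; lia. apply le_INR; lia.
  - apply Rle_ge, Rlt_le, Rinv_0_lt_compat, lt_0_INR; lia.
Qed.

(* A bounded real sequence has a convergent subsequence: extract one from the
   cluster point given by the Stdlib's compactness theorem. *)
Lemma bolzano_weierstrass_subseq (u : nat -> R) (M : R) : (forall n, Rabs (u n) <= M) ->
  exists phi l, incr phi /\ Un_cv (fun n => u (phi n)) l.
Proof.
  intros Hb.
  destruct (Bolzano_Weierstrass u (fun c => -M <= c <= M) (compact_P3 (-M) M)) as [l Hl].
  { intros n; specialize (Hb n). unfold Rabs in Hb; destruct (Rcase_abs (u n)); lra. }
  assert (pick : forall k N, {p | (N <= p)%nat /\ Rabs (u p - l) < / INR (S k)}).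
  { intros k N. apply constructive_indefinite_description.
    assert (Hpos : 0 < / INR (S k)) by (apply Rinv_0_lt_compat, lt_0_INR; lia).
    destruct (Hl (disc l (mkposreal _ Hpos)) N) as [p [Hp1 Hp2]].
    - exists (mkposreal _ Hpos). intros y Hy; exact Hy.
    - exists p; split; auto. }
  set (phi := fix phi k := match k with
                           | O => proj1_sig (pick O O)
                           | S k' => proj1_sig (pick (S k') (S (phi k')))
                           end).
  exists phi, l. split.
  - intros n. simpl. destruct (pick (S n) (S (phi n))) as [p [H1 H2]]; simpl; lia.
  - assert (Hk : forall k, Rabs (u (phi k) - l) < / INR (S k)).
    { intros [|k]; simpl; [destruct (pick 0%nat 0%nat) | destruct (pick (S k) (S (phi k)))];
        simpl; tauto. }
    intros e He. destruct (archi_inv_nat e He) as [K HK]. exists K. intros n Hn.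
    unfold Rdist. eapply Rlt_le_trans. apply Hk.
    apply Rle_trans with (/ INR (S K)); [|lra].
    apply Rinv_le_contravar. apply lt_0_INR; lia. apply le_INR; lia.
Qed.

(* Coordinatewise extraction: a bounded sequence of vectors in C^N has a convergent
   subsequence. *)
Lemma bolzano_weierstrass_vec N (xs : nat -> Vec) :
  (forall n i, (i < N)%nat -> Rabs (re (xs n i)) <= 1 /\ Rabs (im (xs n i)) <= 1) ->
  exists phi y, incr phi /\ vcv N (fun n => xs (phi n)) y.
Proof.
  intros Hb.
  assert (H : forall K, (K <= N)%nat -> exists phi y, incr phi /\
            forall i, (i < K)%nat -> Ccv (fun n => xs (phi n) i) (y i)).
  { induction K; intros HK.
    - exists (fun n => n), (fun _ => C0). split; [intros n; lia| intros; lia].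
    - destruct IHK as [phi [y [Hp Hc]]]; [lia|].
      destruct (bolzano_weierstrass_subseq (fun n => re (xs (phi n) K)) 1)
        as [psi1 [l1 [Hp1 Hc1]]]; [intros n; apply Hb; lia|].
      destruct (bolzano_weierstrass_subseq (fun n => im (xs (phi (psi1 n)) K)) 1)
        as [psi2 [l2 [Hp2 Hc2]]]; [intros n; apply Hb; lia|].
      exists (fun n => phi (psi1 (psi2 n))), (fun i => if Nat.eqb i K then mkC l1 l2 else y i).
      split; [apply incr_comp; auto; apply incr_comp; auto|].
      intros i Hi. destruct (Nat.eqb_spec i K) as [->|HiK].
      + split; simpl; auto. apply (cv_subseq (fun n => re (xs (phi (psi1 n)) K))); auto.
      + apply (Ccv_subseq (fun n => xs (phi (psi1 n)) i)); auto.
        apply (Ccv_subseq (fun n => xs (phi n) i)); auto. apply Hc; lia. }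
  apply H; lia.
Qed.

(** * Spectral theorem for G-self-adjoint matrices *)

Definition nonzero (N : nat) (x : Vec) : Prop := exists i, (i < N)%nat /\ x i <> C0.

(* Squared Euclidean norm; its unit sphere is the compact set on which the Rayleigh
   quotient is maximised. *)
Definition sqnorm (N : nat) (x : Vec) : R := re (dot N x x).

Lemma sqnorm_rsum N x : sqnorm N x = rsum N (fun i => re (x i) * re (x i) + im (x i) * im (x i)).
Proof. unfold sqnorm, dot. rewrite re_csum. apply rsum_ext; intros; simpl; ring. Qed.

Lemma nonzero_dec N (x : Vec) : nonzero N x \/ (forall i, (i < N)%nat -> x i = C0).
Proof.
  destruct (classic (nonzero N x)); auto. right. intros i Hi.
  destruct (classic (x i = C0)); auto. exfalso; apply H; exists i; auto.
Qed.

Lemma sqnorm_pos_nonzero N x : 0 < sqnorm N x -> nonzero N x.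
Proof.
  intros H. destruct (nonzero_dec N x) as [|Hz]; auto. exfalso. rewrite sqnorm_rsum in H.
  rewrite rsum_zero in H; [lra|]. intros k Hk; rewrite (Hz k Hk); simpl; ring.
Qed.

Lemma nonzero_sqnorm_pos N x : nonzero N x -> 0 < sqnorm N x.
Proof.
  intros [i [Hi Hx]]. rewrite sqnorm_rsum.
  pose proof (C_sqnorm_neq0 _ Hx).
  eapply Rlt_le_trans;
    [|apply (rsum_term_le N (fun i => re (x i) * re (x i) + im (x i) * im (x i)) i Hi)];
    [nra| intros; nra].
Qed.

Definition normalize (N : nat) (x : Vec) : Vec := vscale (RtoC (/ sqrt (sqnorm N x))) x.

Lemma sqnorm_normalize N x : nonzero N x -> sqnorm N (normalize N x) = 1.
Proof.
  intros Hx. pose proof (nonzero_sqnorm_pos N x Hx) as H.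
  pose proof (sqrt_lt_R0 _ H). pose proof (sqrt_sqrt (sqnorm N x) (Rlt_le _ _ H)).
  unfold normalize. unfold sqnorm at 1. rewrite dot_vscale.
  change (re (dot N x x)) with (sqnorm N x) in *.
  set (q := sqrt (sqnorm N x)) in *.
  replace (re (Cmul (Cmul (Cconj (RtoC (/ q))) (RtoC (/ q))) (dot N x x)))
    with (/ q * / q * sqnorm N x) by (unfold sqnorm; cunf; simpl; ring).
  rewrite <- H1. field. lra.
Qed.

Lemma unit_sphere_bounded N x i : sqnorm N x = 1 -> (i < N)%nat ->
  Rabs (re (x i)) <= 1 /\ Rabs (im (x i)) <= 1.
Proof.
  intros Hx Hi. rewrite sqnorm_rsum in Hx.
  pose proof (rsum_term_le N (fun i => re (x i) * re (x i) + im (x i) * im (x i)) i Hi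
       (fun j _ => ltac:(nra))) as Hle. simpl in Hle.
  split; apply Rabs_le; nra.
Qed.

Lemma hpd_nonneg N G x : hpd N G -> 0 <= re (quad N G x).
Proof.
  intros [_ HG]. destruct (nonzero_dec N x) as [Hn|Hz].
  - apply Rlt_le; apply HG; auto.
  - rewrite quad_ip, (ip_zero_l N G x x); auto. simpl; lra.
Qed.

Lemma hpd_zero N G x : hpd N G -> re (quad N G x) = 0 -> forall i, (i < N)%nat -> x i = C0.
Proof.
  intros [_ HG] H. destruct (nonzero_dec N x) as [Hn|Hz]; auto. specialize (HG x Hn); lra.
Qed.

Lemma rayleigh_bound N G A CA x : hpd N G -> meq N (mmul N G A) (mmul N (madj A) G) ->
  Gopnorm_le N G A CA ->
  re (ip N G x (mvec N A x)) <= (Rabs CA + 1) * re (quad N G x).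
Proof.
  intros HG HA Hn. set (K := Rabs CA + 1).
  assert (HK : 0 < K) by (unfold K; pose proof (Rabs_pos CA); lra).
  set (y := mvec N A x).
  assert (Hy : re (quad N G y) <= K * K * re (quad N G x)).
  { specialize (Hn x). unfold Gnormv in Hn. fold y in Hn.
    pose proof (hpd_nonneg N G x HG). pose proof (hpd_nonneg N G y HG).
    assert (sqrt (re (quad N G y)) <= K * sqrt (re (quad N G x))).
    { eapply Rle_trans; [exact Hn|]. apply Rmult_le_compat_r. apply sqrt_pos.
      unfold K; pose proof (Rle_abs CA); lra. }
    pose proof (sqrt_pos (re (quad N G x))).
    rewrite <- (sqrt_sqrt (re (quad N G y))), <- (sqrt_sqrt (re (quad N G x))) by auto.
    pose proof (sqrt_pos (re (quad N G y))). nra. }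
  (* expand  0 <= |y - K x|_G^2 *)
  pose proof (hpd_nonneg N G (vadd y (vscale (RtoC (- K)) x)) HG) as H0.
  rewrite quad_ip, ip_vadd_l, !ip_vadd_r, !ip_vscale_l, !ip_vscale_r in H0.
  rewrite <- (herm_ip_conj N G x y (proj1 HG)) in H0.
  pose proof (selfadj_ip_real N G A x (proj1 HG) HA) as Him. fold y in Him.
  rewrite !quad_ip in *. fold y.
  destruct (ip N G x y) as [a b]; destruct (ip N G y y) as [p1 p2]; destruct (ip N G x x) as [q1 q2].
  simpl in *. subst b. cunf; simpl in H0. nra.
Qed.

Lemma quadratic_nonpos_linear (a b : R) : (forall r, a * r + b * (r * r) <= 0) -> a = 0.
Proof.
  intros H. destruct (Req_dec a 0) as [|Ha]; auto. exfalso.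
  set (t := Rabs b + 1). assert (Ht : 0 < t) by (unfold t; pose proof (Rabs_pos b); lra).
  set (r := a / (2 * t)). specialize (H r).
  assert (Hr : r * (2 * t) = a) by (unfold r; field; lra).
  assert (Hb : - t < b < t) by (unfold t; unfold Rabs; destruct (Rcase_abs b); lra).
  rewrite <- Hr in H. assert (r <> 0) by (intro E; rewrite E in Hr; lra).
  assert (0 < r * r) by nra. nra.
Qed.

Section Rayleigh.
Variables (N : nat) (G A : Mat) (CA : R).
Hypothesis HG : hpd N G.
Hypothesis HA : meq N (mmul N G A) (mmul N (madj A) G).
Hypothesis HnA : Gopnorm_le N G A CA.

Definition rnum (x : Vec) : R := re (ip N G x (mvec N A x)).
Definition gsq (x : Vec) : R := re (quad N G x).
Definition rayleigh (x : Vec) : R := rnum x / gsq x.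

Lemma rnum_vscale r x : rnum (vscale (RtoC r) x) = r * r * rnum x.
Proof.
  unfold rnum. rewrite (ip_ext N G _ _ (mvec N A (vscale (RtoC r) x)) (vscale (RtoC r) (mvec N A x)))
    by (auto; intros; apply mvec_vscale).
  rewrite ip_vscale_l, ip_vscale_r. cunf; simpl. ring.
Qed.

Lemma gsq_pos x : nonzero N x -> 0 < gsq x.
Proof. apply (proj2 HG). Qed.

Lemma rayleigh_le_iff x s : nonzero N x -> (rayleigh x <= s <-> rnum x <= s * gsq x).
Proof.
  intros Hx. pose proof (gsq_pos x Hx). unfold rayleigh. split; intros H'.
  - apply (Rmult_le_compat_r (gsq x)) in H'; [|lra].
    unfold Rdiv in H'. rewrite Rmult_assoc, Rinv_l in H' by lra. lra.
  - apply (Rmult_le_reg_r (gsq x)); auto. unfold Rdiv. rewrite Rmult_assoc, Rinv_l by lra. lra.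
Qed.

Variable W : Vec -> Prop.
Hypothesis W_add : forall x w, W x -> W w -> W (vadd x w).
Hypothesis W_scale : forall c x, W x -> W (vscale c x).
Hypothesis W_closed : forall xs y, vcv N xs y -> (forall n, W (xs n)) -> W y.

(* By homogeneity, a bound on the unit sphere of W holds on all of W. *)
Lemma sphere_bound_extends s :
  (forall z, W z -> sqnorm N z = 1 -> rnum z <= s * gsq z) -> forall z, W z -> rnum z <= s * gsq z.
Proof.
  intros Hs z Wz. destruct (nonzero_dec N z) as [Hz|Hz].
  - pose proof (Hs (normalize N z) (W_scale _ _ Wz) (sqnorm_normalize N z Hz)) as H.
    unfold normalize, gsq in H. rewrite rnum_vscale, quad_vscale in H. fold (gsq z) in H.
    set (c := / sqrt (sqnorm N z)) in H.
    assert (Hc : 0 < c * c).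
    { unfold c. pose proof (sqrt_lt_R0 _ (nonzero_sqnorm_pos N z Hz)).
      pose proof (Rinv_0_lt_compat _ H0). nra. }
    apply (Rmult_le_reg_l (c * c)); auto. lra.
  - unfold rnum, gsq. rewrite quad_ip, !(ip_zero_l N G z); auto. simpl; lra.
Qed.

Lemma limit_of_near_maximisers s (ys : nat -> Vec) y (eps : nat -> R) :
  vcv N ys y -> Un_cv eps 0 -> (forall n, nonzero N (ys n)) ->
  (forall n, s - eps n < rayleigh (ys n)) -> s * gsq y <= rnum y.
Proof.
  intros Hcv Heps Hnz Hnear.
  assert (Ha : Un_cv (fun n => rnum (ys n)) (rnum y))
    by (apply (Ccv_ip N G ys (fun n => mvec N A (ys n)) y (mvec N A y)); auto; apply vcv_mvec; auto).
  assert (Hq : Un_cv (fun n => gsq (ys n)) (gsq y)) by (apply (Ccv_ip N G ys ys y y); auto).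
  assert (Hlim : Un_cv (fun n => rnum (ys n) - s * gsq (ys n) + eps n * gsq (ys n))
                       (rnum y - s * gsq y + 0 * gsq y)).
  { apply CV_plus; [apply CV_minus; auto; apply CV_mult; auto; apply Un_cv_const|].
    apply CV_mult; auto. }
  assert (Hpos : forall n, 0 <= rnum (ys n) - s * gsq (ys n) + eps n * gsq (ys n)).
  { intros n. specialize (Hnear n).
    destruct (Rle_lt_dec (rnum (ys n)) ((s - eps n) * gsq (ys n))) as [Hle|Hlt]; [|lra].
    apply (rayleigh_le_iff (ys n) (s - eps n) (Hnz n)) in Hle. lra. }
  pose proof (@Rle_cv_lim (fun _ => 0) _ 0 _ Hpos (Un_cv_const 0) Hlim). lra.
Qed.

Lemma rayleigh_maximiser : (exists x, W x /\ nonzero N x) ->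
  exists y s, W y /\ nonzero N y /\ rnum y = s * gsq y /\ forall z, W z -> rnum z <= s * gsq z.
Proof.
  intros [x [Wx Hx]].
  set (E := fun r => exists z, W z /\ sqnorm N z = 1 /\ r = rayleigh z).
  destruct (completeness E) as [s [Hub Hlub]].
  { exists (Rabs CA + 1). intros r [z [_ [Hz ->]]].
    pose proof (sqnorm_pos_nonzero N z ltac:(lra)) as Hz'.
    apply rayleigh_le_iff; auto. apply rayleigh_bound; auto. }
  { exists (rayleigh (normalize N x)), (normalize N x).
    split; [apply W_scale; auto | auto using sqnorm_normalize]. }
  assert (Hnear : forall n, exists z, W z /\ sqnorm N z = 1 /\ s - / INR (S n) < rayleigh z).
  { intros n. apply NNPP. intros Hno.
    assert (Hb : is_upper_bound E (s - / INR (S n))).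
    { intros r [z [Wz [Hz ->]]]. apply Rnot_lt_le. intro Hlt. apply Hno. exists z. auto. }
    specialize (Hlub _ Hb).
    pose proof (Rinv_0_lt_compat (INR (S n)) (lt_0_INR _ (Nat.lt_0_succ n))). lra. }
  apply choice in Hnear as [xs Hxs].
  destruct (bolzano_weierstrass_vec N xs) as [phi [y [Hphi Hcv]]].
  { intros n i Hi. apply (unit_sphere_bounded N); auto. apply Hxs. }
  assert (Hy1 : sqnorm N y = 1).
  { destruct (Ccv_dot N _ _ y y Hcv Hcv) as [H1 _].
    exact (Un_cv_const_unique _ 1 _ (fun n => proj1 (proj2 (Hxs (phi n)))) H1). }
  assert (Hynz : nonzero N y) by (apply sqnorm_pos_nonzero; lra).
  assert (Wy : W y) by (apply (W_closed _ _ Hcv); intros; apply Hxs).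
  assert (Hmax : forall z, W z -> rnum z <= s * gsq z).
  { apply sphere_bound_extends. intros z Wz Hz.
    apply rayleigh_le_iff; [apply sqnorm_pos_nonzero; lra|]. apply Hub. exists z; auto. }
  exists y, s. repeat split; auto.
  apply Rle_antisym; auto.
  apply (limit_of_near_maximisers s _ y (fun n => / INR (S (phi n))) Hcv).
  - apply (cv_subseq (fun n => / INR (S n))); auto. apply inv_S_cv.
  - intros n. apply sqnorm_pos_nonzero. rewrite (proj1 (proj2 (Hxs (phi n)))); lra.
  - intros n. apply Hxs.
Qed.

(* The form  (x, w) |-> <x, (A - s) w>_G, Hermitian because A is G-self-adjoint. *)
Definition shifted (s : R) (x w : Vec) : C :=
  Cadd (ip N G x (mvec N A w)) (Copp (Cmul (RtoC s) (ip N G x w))).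

Lemma shifted_conj s x w : Cconj (shifted s x w) = shifted s w x.
Proof.
  unfold shifted. rewrite Cconj_add, (herm_ip_conj N G x (mvec N A w) (proj1 HG)).
  rewrite <- (selfadj_ip N G A w x HA).
  replace (Cconj (Copp (Cmul (RtoC s) (ip N G x w))))
    with (Copp (Cmul (RtoC s) (Cconj (ip N G x w)))) by cring.
  rewrite (herm_ip_conj N G x w (proj1 HG)). reflexivity.
Qed.

Lemma shifted_add_l s x1 x2 w : shifted s (vadd x1 x2) w = Cadd (shifted s x1 w) (shifted s x2 w).
Proof. unfold shifted. rewrite !ip_vadd_l. cring. Qed.
Lemma shifted_add_r s x w1 w2 : shifted s x (vadd w1 w2) = Cadd (shifted s x w1) (shifted s x w2).
Proof.
  unfold shifted.
  rewrite (ip_ext N G x x _ (vadd (mvec N A w1) (mvec N A w2))) by (auto; intros; apply mvec_vadd).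
  rewrite !ip_vadd_r. cring.
Qed.
Lemma shifted_scale_l s c x w : shifted s (vscale c x) w = Cmul (Cconj c) (shifted s x w).
Proof. unfold shifted. rewrite !ip_vscale_l. cring. Qed.
Lemma shifted_scale_r s c x w : shifted s x (vscale c w) = Cmul c (shifted s x w).
Proof.
  unfold shifted.
  rewrite (ip_ext N G x x _ (vscale c (mvec N A w))) by (auto; intros; apply mvec_vscale).
  rewrite !ip_vscale_r. cring.
Qed.
Lemma shifted_diag s x : re (shifted s x x) = rnum x - s * gsq x.
Proof. unfold shifted, rnum, gsq. rewrite quad_ip. cunf; simpl. ring. Qed.

(* First-order condition: at a maximiser y the form vanishes against all of W,
   since  r |-> rayleigh (y + r z)  and  r |-> rayleigh (y + i r z)  are maximal at 0. *)
Lemma maximiser_critical s y : W y -> rnum y = s * gsq y ->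
  (forall z, W z -> rnum z <= s * gsq z) -> forall z, W z -> shifted s z y = C0.
Proof.
  intros Wy Hy Hmax.
  assert (Hre : forall z, W z -> re (shifted s z y) = 0).
  { intros z Wz. cut (2 * re (shifted s z y) = 0); [lra|].
    apply (quadratic_nonpos_linear (2 * re (shifted s z y)) (re (shifted s z z))). intros r.
    set (yr := vadd y (vscale (RtoC r) z)).
    assert (H : re (shifted s yr yr) <= 0)
      by (rewrite shifted_diag; pose proof (Hmax yr (W_add _ _ Wy (W_scale _ _ Wz))); lra).
    assert (E : re (shifted s y y) = 0) by (rewrite shifted_diag; lra).
    unfold yr in H.
    rewrite shifted_add_l, !shifted_add_r, !shifted_scale_l, !shifted_scale_r in H.
    rewrite <- (shifted_conj s z y) in H.
    destruct (shifted s y y) as [a1 a2]; destruct (shifted s z y) as [b1 b2];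
      destruct (shifted s z z) as [c1 c2].
    cunf; simpl in *. nra. }
  intros z Wz. pose proof (Hre z Wz) as H1. pose proof (Hre _ (W_scale Ci z Wz)) as H2.
  rewrite shifted_scale_l in H2. destruct (shifted s z y) as [a b].
  cunf; simpl in *. apply C_ext; simpl; lra.
Qed.

Lemma maximiser_eigenvector s y : (forall z, W z -> W (mvec N A z)) ->
  W y -> rnum y = s * gsq y -> (forall z, W z -> rnum z <= s * gsq z) ->
  forall i, (i < N)%nat -> mvec N A y i = Cmul (RtoC s) (y i).
Proof.
  intros W_inv Wy Hy Hmax.
  set (w := vadd (mvec N A y) (vscale (RtoC (- s)) y)).
  assert (Hw : forall z, ip N G z w = shifted s z y).
  { intros z. unfold w, shifted. rewrite ip_vadd_r, ip_vscale_r. cring. }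
  assert (Hw0 : forall i, (i < N)%nat -> w i = C0).
  { apply (hpd_zero N G w HG). rewrite quad_ip, Hw.
    rewrite (maximiser_critical s y Wy Hy Hmax w); [reflexivity|].
    apply W_add; auto. }
  intros i Hi. specialize (Hw0 i Hi). unfold w, vadd, vscale in Hw0.
  destruct (mvec N A y i) as [a b]; destruct (y i) as [c d]. cunf; simpl in *.
  injection Hw0; intros. apply C_ext; simpl; lra.
Qed.

End Rayleigh.

Definition orth_compl (N : nat) (G : Mat) (k : nat) (vs : nat -> Vec) (x : Vec) : Prop :=
  forall j, (j < k)%nat -> ip N G (vs j) x = C0.

Definition orthonormal (N : nat) (G : Mat) (k : nat) (vs : nat -> Vec) : Prop :=
  forall j l, (j < k)%nat -> (l < k)%nat -> ip N G (vs j) (vs l) = kron j l.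

Lemma ip_as_linear N G v x :
  ip N G v x = csum N (fun l => Cmul (csum N (fun i => Cmul (Cconj (v i)) (G i l))) (x l)).
Proof.
  unfold ip, mvec.
  rewrite (csum_ext N _ (fun i => csum N (fun l => Cmul (Cmul (Cconj (v i)) (G i l)) (x l)))).
  2:{ intros. rewrite csum_mull. apply csum_ext; intros; cring. }
  rewrite csum_swap. apply csum_ext; intros. rewrite csum_mulr. reflexivity.
Qed.

Section Eigenbasis.
Variables (N : nat) (G A : Mat) (CA : R).
Hypothesis HG : hpd N G.
Hypothesis HA : meq N (mmul N G A) (mmul N (madj A) G).
Hypothesis HnA : Gopnorm_le N G A CA.

Definition eigvec (v : Vec) (lam : R) : Prop :=
  forall i, (i < N)%nat -> mvec N A v i = Cmul (RtoC lam) (v i).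

Lemma orth_compl_add k vs x w : orth_compl N G k vs x -> orth_compl N G k vs w ->
  orth_compl N G k vs (vadd x w).
Proof. intros H1 H2 j Hj. rewrite ip_vadd_r, H1, H2 by auto. cring. Qed.

Lemma orth_compl_scale k vs c x : orth_compl N G k vs x -> orth_compl N G k vs (vscale c x).
Proof. intros H j Hj. rewrite ip_vscale_r, H by auto. cring. Qed.

Lemma orth_compl_closed k vs xs y : vcv N xs y -> (forall n, orth_compl N G k vs (xs n)) ->
  orth_compl N G k vs y.
Proof.
  intros Hcv H j Hj. apply (Ccv_const_unique (fun n => ip N G (vs j) (xs n))).
  - intros n. apply H; auto.
  - apply Ccv_ip; auto. apply vcv_const.
Qed.

Lemma orth_compl_invariant k vs lam : (forall j, (j < k)%nat -> eigvec (vs j) (lam j)) ->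
  forall z, orth_compl N G k vs z -> orth_compl N G k vs (mvec N A z).
Proof.
  intros Hev z Hz j Hj. rewrite (selfadj_ip N G A (vs j) z HA).
  rewrite (ip_ext N G (mvec N A (vs j)) (vscale (RtoC (lam j)) (vs j)) z z)
    by (auto; intros; apply Hev; auto).
  rewrite ip_vscale_l, (Hz j Hj). cring.
Qed.

Lemma orth_compl_nonzero k vs : (k < N)%nat -> exists x, orth_compl N G k vs x /\ nonzero N x.
Proof.
  intros Hk.
  destruct (homogeneous_nontrivial N k (fun j l => csum N (fun i => Cmul (Cconj (vs j i)) (G i l))) Hk)
    as [x [Hnz Heq]].
  exists x. split; auto. intros j Hj. rewrite ip_as_linear. apply Heq; auto.
Qed.

Lemma eigvec_in_orth_compl k vs lam : (k < N)%nat ->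
  (forall j, (j < k)%nat -> eigvec (vs j) (lam j)) ->
  exists y s, orth_compl N G k vs y /\ nonzero N y /\ eigvec y s.
Proof.
  intros Hk Hev.
  destruct (rayleigh_maximiser N G A CA HG HA HnA (orth_compl N G k vs)
              (orth_compl_scale k vs) (orth_compl_closed k vs)
              (orth_compl_nonzero k vs Hk)) as [y [s [Wy [Hy [Heq Hmax]]]]].
  exists y, s. split; [|split]; auto.
  intros i Hi. apply (maximiser_eigenvector N G A HG HA (orth_compl N G k vs)
           (orth_compl_add k vs) (orth_compl_scale k vs)); auto.
  apply (orth_compl_invariant k vs lam Hev).
Qed.

Lemma G_normalize y : nonzero N y ->
  exists c, ip N G (vscale (RtoC c) y) (vscale (RtoC c) y) = C1.
Proof.
  intros Hnz. pose proof (proj2 HG y Hnz) as Hq.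
  exists (/ sqrt (re (quad N G y))).
  rewrite ip_vscale_l, ip_vscale_r, <- quad_ip.
  pose proof (herm_quad_real N G y (proj1 HG)) as Him.
  pose proof (sqrt_lt_R0 _ Hq). pose proof (sqrt_sqrt _ (Rlt_le _ _ Hq)).
  destruct (quad N G y) as [a b]; simpl in *. subst b.
  apply C_ext; cunf; simpl; [|ring].
  rewrite <- H0 at 3. field. lra.
Qed.

Lemma orthonormal_eigvecs : forall k, (k <= N)%nat -> exists vs lam, orthonormal N G k vs /\
  (forall j, (j < k)%nat -> eigvec (vs j) (lam j)).
Proof.
  induction k; intros Hk.
  - exists (fun _ _ => C0), (fun _ => 0). split; [intros j l Hj; lia | intros j Hj; lia].
  - destruct IHk as [vs [lam [Hon Hev]]]; [lia|].
    destruct (eigvec_in_orth_compl k vs lam ltac:(lia) Hev) as [y [s [Wy [Hnz Hey]]]].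
    destruct (G_normalize y Hnz) as [c Hc].
    set (v := vscale (RtoC c) y).
    exists (fun j => if Nat.eqb j k then v else vs j), (fun j => if Nat.eqb j k then s else lam j).
    split.
    + intros j l Hj Hl. destruct (Nat.eqb_spec j k); destruct (Nat.eqb_spec l k); subst.
      * rewrite kron_refl. exact Hc.
      * rewrite kron_neq by lia. unfold v. rewrite ip_vscale_l.
        rewrite <- (herm_ip_conj N G (vs l) y (proj1 HG)), Wy by lia. cring.
      * rewrite kron_neq by lia. unfold v. rewrite ip_vscale_r, Wy by lia. cring.
      * apply Hon; lia.
    + intros j Hj i Hi. destruct (Nat.eqb_spec j k).
      * unfold v. rewrite mvec_vscale, Hey by auto. unfold vscale. cring.
      * apply Hev; auto; lia.
Qed.

(* A vector G-orthogonal to N orthonormal vectors vanishes: otherwise the N + 1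
   vectors would satisfy a nontrivial linear relation, and pairing it with each of
   them shows that all its coefficients vanish. *)
Lemma orth_to_orthonormal_zero vs w : orthonormal N G N vs ->
  orth_compl N G N vs w -> forall i, (i < N)%nat -> w i = C0.
Proof.
  intros Hon Hw.
  destruct (nonzero_dec N w) as [Hnz|]; auto. exfalso.
  set (u := fun k => if Nat.ltb k N then vs k else w).
  destruct (homogeneous_nontrivial (S N) N (fun j k => u k j) ltac:(lia))
    as [c [[k0 [Hk0 Hc0]] Hc]].
  set (z := fun i => csum (S N) (fun k => Cmul (c k) (u k i))).
  assert (Hz : forall i, (i < N)%nat -> z i = C0).
  { intros i Hi. unfold z. rewrite <- (Hc i Hi). apply csum_ext; intros; cring. }
  assert (Eu : u N = w) by (unfold u; rewrite Nat.ltb_irrefl; auto).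
  assert (Hpair : forall v, ip N G v z = C0) by (intros v; apply ip_zero_r; auto).
  assert (Hcj : forall j, (j < N)%nat -> c j = C0).
  { intros j Hj. pose proof (Hpair (vs j)) as E. unfold z in E.
    rewrite ip_csum_r, csum_S, Eu, Hw in E by auto.
    rewrite (csum_ext N _ (fun k => Cmul (kron j k) (c k))) in E.
    2:{ intros k Hk. unfold u. destruct (Nat.ltb_spec k N); [|lia]. rewrite Hon by auto. cring. }
    rewrite csum_kron in E by auto. rewrite <- E. cring. }
  assert (HcN : c N = C0).
  { pose proof (Hpair w) as E. unfold z in E. rewrite ip_csum_r, csum_S, csum_zero, Eu in E.
    2:{ intros k Hk. unfold u. destruct (Nat.ltb_spec k N); [|lia].
        rewrite <- (herm_ip_conj N G (vs k) w (proj1 HG)), Hw by auto. cring. }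
    assert (Hq : ip N G w w <> C0).
    { intro Hq. pose proof (proj2 HG w Hnz). rewrite quad_ip, Hq in H. simpl in H; lra. }
    rewrite Cadd_0_l in E. destruct (Cmul_eq0 _ _ E); [auto|contradiction]. }
  apply Hc0. destruct (Nat.eq_dec k0 N) as [->|]; auto. apply Hcj; lia.
Qed.

Lemma orthonormal_expansion vs : orthonormal N G N vs ->
  forall x i, (i < N)%nat -> x i = csum N (fun k => Cmul (vs k i) (ip N G (vs k) x)).
Proof.
  intros Hon x.
  set (w := fun i => csum N (fun k => Cmul (Copp (ip N G (vs k) x)) (vs k i))).
  assert (Hw : forall i, (i < N)%nat -> vadd x w i = C0).
  { apply (orth_to_orthonormal_zero vs); auto. intros j Hj.
    rewrite ip_vadd_r. unfold w. rewrite ip_csum_r.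
    rewrite (csum_ext N _ (fun k => Cmul (kron j k) (Copp (ip N G (vs k) x)))).
    2:{ intros k Hk. rewrite Hon by auto. cring. }
    rewrite csum_kron by auto. cring. }
  intros i Hi. specialize (Hw i Hi). unfold vadd, w in Hw.
  rewrite (csum_ext N _ (fun k => Copp (Cmul (ip N G (vs k) x) (vs k i)))), <- csum_opp in Hw
    by (intros; cring).
  rewrite (csum_ext N _ (fun k => Cmul (ip N G (vs k) x) (vs k i))) by (intros; cring).
  destruct (x i) as [a b]; destruct (csum N (fun k => Cmul (ip N G (vs k) x) (vs k i))) as [c d].
  cunf; injection Hw; intros; apply C_ext; simpl; lra.
Qed.

Lemma eigval_bound v lam : ip N G v v = C1 -> eigvec v lam -> Rabs lam <= CA.
Proof.
  intros H1 H2. specialize (HnA v). unfold Gnormv in HnA.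
  assert (E : re (quad N G (mvec N A v)) = Rsqr lam).
  { rewrite (quad_vext N G (mvec N A v) (vscale (RtoC lam) v)) by auto.
    rewrite quad_vscale, quad_ip, H1. simpl. unfold Rsqr; ring. }
  assert (E2 : re (quad N G v) = 1) by (rewrite quad_ip, H1; reflexivity).
  rewrite E, E2, sqrt_1, sqrt_Rsqr_abs in HnA. lra.
Qed.

Theorem G_orthonormal_eigenbasis : exists vs lam, orthonormal N G N vs /\
  (forall j, (j < N)%nat -> eigvec (vs j) (lam j)) /\
  (forall j, (j < N)%nat -> Rabs (lam j) <= CA).
Proof.
  destruct (orthonormal_eigvecs N (le_n N)) as [vs [lam [Hon Hev]]].
  exists vs, lam. repeat split; auto.
  intros j Hj. apply (eigval_bound (vs j)); auto. rewrite Hon by auto. apply kron_refl.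
Qed.

End Eigenbasis.

(** * The exponential of a diagonalisable matrix *)

Fixpoint Cpow (z : C) (m : nat) : C := match m with O => C1 | S m' => Cmul z (Cpow z m') end.

Fixpoint cexp_partial (z : C) (n : nat) : C :=
  match n with
  | O => C1
  | S n' => Cadd (cexp_partial z n') (Cmul (RtoC (/ INR (fact (S n')))) (Cpow z (S n')))
  end.

Lemma Rlim_eq u l : Un_cv u l -> Rlim u = l.
Proof.
  intros H. unfold Rlim. apply (UL_sequence u); auto.
  apply (epsilon_spec (inhabits 0) (fun l => Un_cv u l)). eauto.
Qed.

Section Spec.
Variables (N : nat) (M : Mat) (p q : nat -> Vec) (mu : nat -> C).
Hypothesis Hdecomp : forall i j, (i < N)%nat -> (j < N)%nat ->
  mid i j = csum N (fun k => Cmul (p k i) (q k j)).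
Hypothesis Heig : forall k i, (k < N)%nat -> (i < N)%nat ->
  mvec N M (p k) i = Cmul (mu k) (p k i).

Lemma mpow_spec m i j : (i < N)%nat -> (j < N)%nat ->
  mpow N M m i j = csum N (fun k => Cmul (Cpow (mu k) m) (Cmul (p k i) (q k j))).
Proof.
  revert i j; induction m; intros i j Hi Hj.
  - simpl. rewrite Hdecomp by auto. apply csum_ext; intros; cring.
  - simpl. unfold mmul.
    rewrite (csum_ext N _ (fun l => csum N (fun k =>
      Cmul (Cmul (Cpow (mu k) m) (q k j)) (Cmul (M i l) (p k l))))).
    2:{ intros l Hl. rewrite IHm by auto. rewrite csum_mull. apply csum_ext; intros; cring. }
    rewrite csum_swap. apply csum_ext; intros k Hk.
    rewrite <- csum_mull. fold (mvec N M (p k) i). rewrite Heig by auto. cring.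
Qed.

Lemma mexp_partial_spec n i j : (i < N)%nat -> (j < N)%nat ->
  mexp_partial N M n i j = csum N (fun k => Cmul (cexp_partial (mu k) n) (Cmul (p k i) (q k j))).
Proof.
  intros Hi Hj. induction n.
  - simpl. rewrite Hdecomp by auto. apply csum_ext; intros; cring.
  - cbn [mexp_partial]. unfold madd, mscale. rewrite IHn. rewrite (mpow_spec (S n)) by auto.
    cbn [cexp_partial].
    rewrite csum_mull, <- csum_add. apply csum_ext; intros; cring.
Qed.

Lemma mexp_spec (E : nat -> C) :
  (forall k, (k < N)%nat -> Ccv (cexp_partial (mu k)) (E k)) ->
  forall i j, (i < N)%nat -> (j < N)%nat ->
  mexp N M i j = csum N (fun k => Cmul (E k) (Cmul (p k i) (q k j))).
Proof.
  intros Hcv i j Hi Hj.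
  assert (H : Ccv (fun n => mexp_partial N M n i j)
                  (csum N (fun k => Cmul (E k) (Cmul (p k i) (q k j))))).
  { apply (Ccv_ext (fun n => csum N (fun k => Cmul (cexp_partial (mu k) n) (Cmul (p k i) (q k j))))).
    intros; symmetry; apply mexp_partial_spec; auto.
    apply (Ccv_csum N (fun n k => Cmul (cexp_partial (mu k) n) (Cmul (p k i) (q k j)))).
    intros; apply Ccv_mul; auto. apply Ccv_const. }
  destruct H as [H1 H2]. unfold mexp. apply C_ext; simpl; apply Rlim_eq; auto.
Qed.

End Spec.

(* The scalar series at an imaginary point iθ: its even and odd partial sums are the
   cosine and sine series of the Stdlib, so it converges to cos θ + i sin θ. *)
Definition cis (t : R) : C := mkC (cos t) (sin t).

Lemma Cpow_even th p : Cpow (mkC 0 th) (2 * p) = mkC ((-1) ^ p * (Rsqr th) ^ p) 0.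
Proof.
  induction p.
  - apply C_ext; simpl; ring.
  - replace (2 * S p)%nat with (S (S (2 * p))) by lia. cbn [Cpow]. rewrite IHp.
    apply C_ext; unfold Cmul, Rsqr; simpl; ring.
Qed.

Lemma Cpow_odd th p : Cpow (mkC 0 th) (S (2 * p)) = mkC 0 (th * ((-1) ^ p * (Rsqr th) ^ p)).
Proof. cbn [Cpow]. rewrite Cpow_even. apply C_ext; unfold Cmul; simpl; ring. Qed.

(* Partial sums of the series by which the Stdlib defines cos and sin. *)
Definition cos_series th p := sum_f_R0 (fun i => cos_n i * (Rsqr th) ^ i) p.
Definition sin_series th p := sum_f_R0 (fun i => sin_n i * (Rsqr th) ^ i) p.

Lemma cexp_partial_odd th p :
  cexp_partial (mkC 0 th) (S (2 * p)) = mkC (cos_series th p) (th * sin_series th p).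
Proof.
  induction p.
  - apply C_ext; simpl; unfold cos_series, sin_series, cos_n, sin_n; simpl; field.
  - replace (S (2 * S p)) with (S (S (S (2 * p)))) by lia.
    change (cexp_partial (mkC 0 th) (S (S (S (2 * p))))) with
      (Cadd (Cadd (cexp_partial (mkC 0 th) (S (2 * p)))
                  (Cmul (RtoC (/ INR (fact (S (S (2 * p)))))) (Cpow (mkC 0 th) (S (S (2 * p))))))
            (Cmul (RtoC (/ INR (fact (S (S (S (2 * p))))))) (Cpow (mkC 0 th) (S (S (S (2 * p))))))).
    rewrite IHp.
    replace (S (S (2 * p))) with (2 * S p)%nat by lia. rewrite Cpow_even.
    replace (S (S (S (2 * p)))) with (S (2 * S p))%nat by lia. rewrite Cpow_odd.
    unfold cos_series, sin_series. simpl sum_f_R0. unfold cos_n, sin_n.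
    replace (2 * S p + 1)%nat with (S (2 * S p)) by lia.
    apply C_ext; unfold Cmul, Cadd, RtoC; simpl re; simpl im; unfold Rdiv; ring.
Qed.

Lemma cexp_partial_even th p :
  cexp_partial (mkC 0 th) (S (S (2 * p))) = mkC (cos_series th (S p)) (th * sin_series th p).
Proof.
  change (cexp_partial (mkC 0 th) (S (S (2 * p)))) with
    (Cadd (cexp_partial (mkC 0 th) (S (2 * p)))
          (Cmul (RtoC (/ INR (fact (S (S (2 * p)))))) (Cpow (mkC 0 th) (S (S (2 * p)))))).
  rewrite cexp_partial_odd. replace (S (S (2 * p))) with (2 * S p)%nat by lia. rewrite Cpow_even.
  unfold cos_series. simpl sum_f_R0. unfold cos_n.
  apply C_ext; unfold Cmul, Cadd, RtoC; simpl re; simpl im; unfold Rdiv; ring.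
Qed.

Lemma re_cexp_partial th n : re (cexp_partial (mkC 0 th) n) = cos_series th (Nat.div2 n).
Proof.
  destruct (Nat.Even_or_Odd n) as [[p ->]|[p ->]].
  - destruct p. simpl. unfold cos_series; simpl; unfold cos_n; simpl; field.
    replace (2 * S p)%nat with (S (S (2 * p))) by lia. rewrite cexp_partial_even. simpl re.
    f_equal. replace (S (S (2 * p))) with (2 * S p)%nat by lia. rewrite Nat.div2_double. auto.
  - replace (2 * p + 1)%nat with (S (2 * p)) by lia. rewrite cexp_partial_odd. simpl re.
    rewrite Nat.div2_succ_double. auto.
Qed.

Lemma im_cexp_partial th n : (1 <= n)%nat ->
  im (cexp_partial (mkC 0 th) n) = th * sin_series th (Nat.div2 (pred n)).
Proof.
  intros Hn. destruct (Nat.Even_or_Odd n) as [[p ->]|[p ->]].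
  - destruct p. lia.
    replace (2 * S p)%nat with (S (S (2 * p))) by lia. rewrite cexp_partial_even. simpl im.
    rewrite Nat.pred_succ, Nat.div2_succ_double. auto.
  - replace (2 * p + 1)%nat with (S (2 * p)) by lia. rewrite cexp_partial_odd. simpl im.
    rewrite Nat.pred_succ, Nat.div2_double. auto.
Qed.

Lemma cv_div2 u l : Un_cv u l -> Un_cv (fun n => u (Nat.div2 n)) l.
Proof.
  intros H e He. destruct (H e He) as [K HK]. exists (2 * K)%nat. intros n Hn. apply HK.
  pose proof (Nat.div2_odd n). destruct (Nat.odd n); simpl in H0; lia.
Qed.

Lemma cv_eventually u v l K : (forall n, (K <= n)%nat -> u n = v n) -> Un_cv v l -> Un_cv u l.
Proof.
  intros E H e He. destruct (H e He) as [K' HK]. exists (max K K'). intros n Hn.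
  rewrite E by lia. apply HK; lia.
Qed.

Lemma cexp_partial_cv th : Ccv (cexp_partial (mkC 0 th)) (cis th).
Proof.
  split; simpl.
  - apply (Un_cv_ext (fun n => cos_series th (Nat.div2 n))). intros; symmetry; apply re_cexp_partial.
    unfold cos. destruct (exist_cos (Rsqr th)) as [a Ha]. exact (cv_div2 (cos_series th) a Ha).
  - apply (cv_eventually _ (fun n => th * sin_series th (Nat.div2 (pred n))) _ 1%nat).
    intros; apply im_cexp_partial; auto.
    unfold sin. destruct (exist_sin (Rsqr th)) as [a Ha].
    apply CV_mult. apply Un_cv_const.
    intros e He. destruct (cv_div2 (sin_series th) a Ha e He) as [K HK]. exists (S K). intros n Hn.
    apply HK. lia.
Qed.

(** * Time averages of trigonometric polynomials *)

Lemma dpl_ext f g x l : (forall t, f t = g t) -> derivable_pt_lim f x l -> derivable_pt_lim g x l.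
Proof.
  intros E H e He. destruct (H e He) as [d Hd]. exists d. intros h Hh Hh'. rewrite <- !E. auto.
Qed.

Lemma dpl_eq f x l l' : l = l' -> derivable_pt_lim f x l -> derivable_pt_lim f x l'.
Proof. intros ->; auto. Qed.

Lemma dpl_cont f x l : derivable_pt_lim f x l -> continuity_pt f x.
Proof. intros H. apply derivable_continuous_pt. exists l. exact H. Qed.

Lemma dpl_lin w x : derivable_pt_lim (fun t => w * t) x w.
Proof.
  apply (dpl_eq _ _ (w * 1)); [ring|].
  apply (derivable_pt_lim_scal id w x 1), derivable_pt_lim_id.
Qed.

Lemma dpl_const c x : derivable_pt_lim (fun _ => c) x 0.
Proof. apply (derivable_pt_lim_const c x). Qed.

Lemma dpl_sinw w x : derivable_pt_lim (fun t => sin (w * t)) x (w * cos (w * x)).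
Proof.
  apply (dpl_eq _ _ (cos (w * x) * w)); [ring|].
  apply (dpl_ext (comp sin (fun t => w * t))); [reflexivity|].
  apply derivable_pt_lim_comp. apply dpl_lin. apply derivable_pt_lim_sin.
Qed.

Lemma dpl_cosw w x : derivable_pt_lim (fun t => cos (w * t)) x (- w * sin (w * x)).
Proof.
  apply (dpl_eq _ _ (- sin (w * x) * w)); [ring|].
  apply (dpl_ext (comp cos (fun t => w * t))); [reflexivity|].
  apply derivable_pt_lim_comp. apply dpl_lin. apply derivable_pt_lim_cos.
Qed.

Lemma dpl_add f g x l1 l2 : derivable_pt_lim f x l1 -> derivable_pt_lim g x l2 ->
  derivable_pt_lim (fun t => f t + g t) x (l1 + l2).
Proof. intros. apply (dpl_ext (plus_fct f g)); [reflexivity|]. apply derivable_pt_lim_plus; auto. Qed.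

Lemma dpl_scal c f x l : derivable_pt_lim f x l -> derivable_pt_lim (fun t => c * f t) x (c * l).
Proof. intros. apply (dpl_ext (mult_real_fct c f)); [reflexivity|]. apply derivable_pt_lim_scal; auto. Qed.

Definition trig (a b w t : R) := a * cos (w * t) + b * sin (w * t).
Definition trig_prim (a b w t : R) :=
  if Req_EM_T w 0 then a * t else / w * (a * sin (w * t) + (- b) * cos (w * t)).

Lemma trig_deriv a b w x :
  derivable_pt_lim (trig a b w) x (- a * w * sin (w * x) + b * w * cos (w * x)).
Proof.
  unfold trig. apply (dpl_eq _ _ (a * (- w * sin (w * x)) + b * (w * cos (w * x)))); [ring|].
  apply dpl_add; apply dpl_scal; [apply dpl_cosw | apply dpl_sinw].
Qed.

Lemma trig_cont a b w x : continuity_pt (trig a b w) x.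
Proof. eapply dpl_cont, trig_deriv. Qed.

Lemma trig_prim_deriv a b w x : derivable_pt_lim (trig_prim a b w) x (trig a b w x).
Proof.
  unfold trig_prim, trig. destruct (Req_EM_T w 0) as [->|Hw].
  - apply (dpl_eq _ _ (a * 1)). rewrite Rmult_0_l, cos_0, sin_0; ring.
    apply dpl_scal. apply (dpl_ext id); [reflexivity|]. apply derivable_pt_lim_id.
  - apply (dpl_eq _ _ (/ w * (a * (w * cos (w * x)) + - b * (- w * sin (w * x))))).
    field; auto.
    apply dpl_scal. apply dpl_add; apply dpl_scal; [apply dpl_sinw | apply dpl_cosw].
Qed.

Lemma trig_prim_diff a b w T : trig_prim a b w T - trig_prim a b w (- T) =
  if Req_EM_T w 0 then 2 * a * T else 2 * a * sin (w * T) / w.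
Proof.
  unfold trig_prim. destruct (Req_EM_T w 0); [ring|].
  replace (w * - T) with (- (w * T)) by ring. rewrite sin_neg, cos_neg. field; auto.
Qed.

Lemma dpl_rsum n (F f : nat -> R -> R) x :
  (forall p, (p < n)%nat -> derivable_pt_lim (F p) x (f p x)) ->
  derivable_pt_lim (fun t => rsum n (fun p => F p t)) x (rsum n (fun p => f p x)).
Proof.
  induction n; intros H; simpl.
  - apply (dpl_const 0).
  - apply dpl_add. apply IHn; intros; apply H; lia. apply H; lia.
Qed.

Lemma cont_rsum n (f : nat -> R -> R) x :
  (forall p, (p < n)%nat -> continuity_pt (f p) x) ->
  continuity_pt (fun t => rsum n (fun p => f p t)) x.
Proof.
  induction n; intros H; simpl.
  - apply continuity_pt_const. intros a b; reflexivity.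
  - apply (continuity_pt_plus (fun t => rsum n (fun p => f p t)) (f n)).
    + apply IHn; intros; apply H; lia.
    + apply H; lia.
Qed.

Lemma riemann_ftc f F a b : a <= b ->
  (forall x, a <= x <= b -> derivable_pt_lim F x (f x)) ->
  (forall x, a <= x <= b -> continuity_pt f x) ->
  forall pr : Riemann_integrable f a b, RiemannInt pr = F b - F a.
Proof.
  intros H Hd H0 pr.
  rewrite (RiemannInt_P20 H (FTC_P1 H H0) pr).
  assert (H1 := RiemannInt_P29 H H0).
  assert (H2 : antiderivative f F a b).
  { split; auto. intros x Hx. exists (exist _ (f x) (Hd x Hx)).
    symmetry. apply derive_pt_eq_0. apply Hd; auto. }
  destruct (antiderivative_Ucte f _ _ _ _ H1 H2) as [c Hc].
  rewrite !Hc; [ring| split; lra | split; lra].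
Qed.

Lemma Rint_spec f a b v :
  (exists pr : Riemann_integrable f a b, RiemannInt pr = v) -> Rint f a b = v.
Proof.
  intros [pr Hpr]. unfold Rint.
  pose proof (epsilon_spec (inhabits 0)
    (fun I => exists pr : Riemann_integrable f a b, RiemannInt pr = I)
    (ex_intro _ v (ex_intro _ pr Hpr))) as [pr' Hpr']. simpl in Hpr'.
  rewrite <- Hpr', <- Hpr. apply RiemannInt_P5.
Qed.

(* Double sums of trigonometric terms: the real and imaginary parts of
   Σ_{k,l} c_{kl} e^{i ω_{kl} t}. *)
Definition trig_poly (n : nat) (al be om : nat -> nat -> R) (t : R) :=
  rsum n (fun k => rsum n (fun l => trig (al k l) (be k l) (om k l) t)).
Definition trig_poly_prim (n : nat) (al be om : nat -> nat -> R) (t : R) :=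
  rsum n (fun k => rsum n (fun l => trig_prim (al k l) (be k l) (om k l) t)).

Lemma trig_poly_cont n al be om x : continuity_pt (trig_poly n al be om) x.
Proof.
  unfold trig_poly.
  apply (cont_rsum n (fun k t => rsum n (fun l => trig (al k l) (be k l) (om k l) t))).
  intros k Hk. apply (cont_rsum n (fun l => trig (al k l) (be k l) (om k l))).
  intros; apply trig_cont.
Qed.

Lemma trig_poly_deriv n al be om x :
  derivable_pt_lim (trig_poly_prim n al be om) x (trig_poly n al be om x).
Proof.
  unfold trig_poly, trig_poly_prim.
  apply (dpl_rsum n (fun k t => rsum n (fun l => trig_prim (al k l) (be k l) (om k l) t))
                    (fun k t => rsum n (fun l => trig (al k l) (be k l) (om k l) t))).
  intros k Hk.
  apply (dpl_rsum n (fun l => trig_prim (al k l) (be k l) (om k l))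
                    (fun l => trig (al k l) (be k l) (om k l))).
  intros; apply trig_prim_deriv.
Qed.

Lemma trig_poly_int n al be om T : 0 < T -> Riemann_integrable (trig_poly n al be om) (- T) T.
Proof. intros. apply continuity_implies_RiemannInt. lra. intros; apply trig_poly_cont. Qed.

Lemma trig_poly_Rint n al be om T : 0 < T ->
  Rint (trig_poly n al be om) (- T) T =
  rsum n (fun k => rsum n (fun l =>
    if Req_EM_T (om k l) 0 then 2 * al k l * T else 2 * al k l * sin (om k l * T) / om k l)).
Proof.
  intros HT. apply Rint_spec. exists (trig_poly_int n al be om T HT).
  rewrite (riemann_ftc _ (trig_poly_prim n al be om));
    [| lra | intros; apply trig_poly_deriv | intros; apply trig_poly_cont].
  unfold trig_poly_prim. rewrite rsum_minus.
  apply rsum_ext; intros k Hk. rewrite rsum_minus.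
  apply rsum_ext; intros l Hl. rewrite <- (trig_prim_diff (al k l) (be k l) (om k l) T). ring.
Qed.

Lemma rsum_avg_bound n f g h c : 0 < c -> (forall k, (k < n)%nat -> Rabs (f k / c - g k) <= h k) ->
  Rabs (rsum n f / c - rsum n g) <= rsum n h.
Proof.
  intros Hc; induction n; intros H; simpl.
  - unfold Rdiv; rewrite Rmult_0_l, Rminus_0_r, Rabs_R0; lra.
  - replace ((rsum n f + f n) / c - (rsum n g + g n))
      with ((rsum n f / c - rsum n g) + (f n / c - g n)) by (field; lra).
    eapply Rle_trans; [apply Rabs_triang|]. apply Rplus_le_compat.
    + apply IHn; intros; apply H; lia.
    + apply H; lia.
Qed.

(* The average of one term differs from its resonant part (the term itself if ω = 0,
   zero otherwise) by at most |a| / (|ω| T). *)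
Lemma trig_term_avg_bound a w T : 0 < T ->
  Rabs ((if Req_EM_T w 0 then 2 * a * T else 2 * a * sin (w * T) / w) / (2 * T)
        - (if Req_EM_T w 0 then a else 0))
  <= (if Req_EM_T w 0 then 0 else Rabs a / Rabs w) / T.
Proof.
  intros HT. destruct (Req_EM_T w 0).
  - replace (2 * a * T / (2 * T) - a) with 0 by (field; lra). rewrite Rabs_R0. unfold Rdiv; lra.
  - replace (2 * a * sin (w * T) / w / (2 * T) - 0) with ((a / w) * (sin (w * T) / T))
      by (field; lra).
    rewrite Rabs_mult. unfold Rdiv. rewrite Rabs_mult, Rabs_mult, Rabs_inv, Rabs_inv.
    rewrite (Rabs_right T) by lra.
    pose proof (SIN_bound (w * T)). assert (Rabs (sin (w * T)) <= 1) by (apply Rabs_le; lra).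
    assert (0 < Rabs w) by (apply Rabs_pos_lt; auto).
    assert (0 < / Rabs w) by (apply Rinv_0_lt_compat; auto).
    assert (0 < / T) by (apply Rinv_0_lt_compat; auto).
    pose proof (Rabs_pos a). pose proof (Rabs_pos (sin (w * T))).
    replace (Rabs a * / Rabs w * / T) with (Rabs a * / Rabs w * (1 * / T)) by ring.
    apply Rmult_le_compat_l. nra. apply Rmult_le_compat_r; lra.
Qed.

Lemma trig_poly_avg_bound n al be om T : 0 < T ->
  Rabs (Rint (trig_poly n al be om) (- T) T / (2 * T) -
        rsum n (fun k => rsum n (fun l => if Req_EM_T (om k l) 0 then al k l else 0)))
  <= rsum n (fun k => rsum n (fun l =>
       if Req_EM_T (om k l) 0 then 0 else Rabs (al k l) / Rabs (om k l))) / T.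
Proof.
  intros HT. rewrite trig_poly_Rint by auto. rewrite (rsum_div n _ T).
  apply rsum_avg_bound. lra. intros k Hk. rewrite (rsum_div n _ T).
  apply rsum_avg_bound. lra. intros l Hl. apply trig_term_avg_bound; auto.
Qed.

Lemma cis_mul a b : Cmul (cis a) (cis b) = cis (a + b).
Proof. apply C_ext; simpl; [rewrite cos_plus | rewrite sin_plus]; ring. Qed.

Lemma time_average_of_rate N (F : R -> Mat) (L : Mat) (D : R) : 0 <= D ->
  (forall T, 0 < T -> forall i j, (i < N)%nat -> (j < N)%nat ->
     inhabited (Riemann_integrable (fun t => re (F t i j)) (- T) T) /\
     inhabited (Riemann_integrable (fun t => im (F t i j)) (- T) T)) ->
  (forall T, 0 < T -> forall i j, (i < N)%nat -> (j < N)%nat ->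
     Rabs (Rint (fun t => re (F t i j)) (- T) T / (2 * T) - re (L i j)) <= D / T /\
     Rabs (Rint (fun t => im (F t i j)) (- T) T / (2 * T) - im (L i j)) <= D / T) ->
  time_average_is N F L.
Proof.
  intros HD Hint Hrate. split; auto.
  intros eps Heps.
  assert (HDe : 0 <= D / eps) by (apply Rmult_le_pos; [lra | apply Rlt_le, Rinv_0_lt_compat; lra]).
  exists (D / eps + 1). split; [lra|].
  intros T HT i j Hi Hj. assert (HT0 : 0 < T) by lra.
  assert (Hlt : D / T < eps).
  { apply (Rmult_lt_reg_r T); auto. unfold Rdiv. rewrite Rmult_assoc, Rinv_l, Rmult_1_r by lra.
    assert (E : D / eps * eps = D) by (field; lra). nra. }
  destruct (Hrate T HT0 i j Hi Hj). split; lra.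
Qed.

(** * The time average in an eigenbasis of A *)

Section TimeAverage.
Variables (N : nat) (G A B : Mat).
Hypothesis HG : hpd N G.
Hypothesis HA : meq N (mmul N G A) (mmul N (madj A) G).
Variables (vs : nat -> Vec) (lam : nat -> R).
Hypothesis Hon : orthonormal N G N vs.
Hypothesis Hev : forall j, (j < N)%nat -> eigvec N A (vs j) (lam j).

(* Coordinates of G v_k and of the conjugates; the dual basis of (v_k) for the
   G-inner product consists of the rows (G v_k)^*. *)
Definition Gv k i := mvec N G (vs k) i.
Definition dualv k j := Cconj (Gv k j).
Definition conjv k j := Cconj (vs k j).
(* Matrix of G B in the eigenbasis, and the coefficients and frequencies of the
   trigonometric polynomial  (e^{itA^*} G B e^{-itA})_{ij}. *)
Definition bcoef k l := ip N (mmul N G B) (vs k) (vs l).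
Definition coef i j k l := Cmul (Gv k i) (Cmul (bcoef k l) (dualv l j)).
Definition freq k l := lam k - lam l.

Lemma resolution_id i j : (i < N)%nat -> (j < N)%nat ->
  mid i j = csum N (fun k => Cmul (vs k i) (dualv k j)).
Proof.
  intros Hi Hj. rewrite (orthonormal_expansion N G HG vs Hon (fun l => mid l j) i Hi).
  apply csum_ext; intros k Hk. f_equal. unfold ip, dualv, Gv.
  rewrite (csum_ext N _ (fun l => Cmul (Cconj (vs k l)) (G l j))).
  2:{ intros l Hl. f_equal. apply (csum_unitv N j (G l)); auto. }
  unfold mvec. rewrite csum_conj. apply csum_ext; intros l Hl.
  rewrite (proj1 HG j l) by auto. unfold madj. cring.
Qed.

Lemma resolution_id_adj i j : (i < N)%nat -> (j < N)%nat ->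
  mid i j = csum N (fun k => Cmul (Gv k i) (conjv k j)).
Proof.
  intros Hi Hj. transitivity (Cconj (mid j i)).
  { unfold mid. destruct (Nat.eqb_spec i j); destruct (Nat.eqb_spec j i); try lia; cring. }
  rewrite resolution_id by auto. rewrite csum_conj. apply csum_ext; intros k Hk.
  unfold dualv, conjv. cring.
Qed.

(* v_k is an eigenvector of -itA, and G v_k one of itA^* (as A^* G = G A). *)
Lemma eig_minus_itA t k i : (k < N)%nat -> (i < N)%nat ->
  mvec N (mscale (mkC 0 (- t)) A) (vs k) i = Cmul (mkC 0 (- t * lam k)) (vs k i).
Proof. intros. rewrite mvec_mscale, Hev by auto. cring. Qed.

Lemma eig_itAadj t k i : (k < N)%nat -> (i < N)%nat ->
  mvec N (mscale (mkC 0 t) (madj A)) (Gv k) i = Cmul (mkC 0 (t * lam k)) (Gv k i).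
Proof.
  intros Hk Hi. rewrite mvec_mscale. unfold Gv.
  rewrite (mvec_ext N (madj A) (fun i => mvec N G (vs k) i) (mvec N G (vs k))) by auto.
  rewrite <- mvec_mmul, (mvec_mext N _ (mmul N G A)) by (intros; symmetry; apply HA; auto).
  rewrite mvec_mmul, (mvec_ext N G _ (vscale (RtoC (lam k)) (vs k))) by (intros; apply Hev; auto).
  rewrite mvec_vscale. cring.
Qed.

Lemma exp_itAadj_spec t i l : (i < N)%nat -> (l < N)%nat ->
  mexp N (mscale (mkC 0 t) (madj A)) i l
  = csum N (fun k => Cmul (cis (t * lam k)) (Cmul (Gv k i) (conjv k l))).
Proof.
  intros. apply (mexp_spec N _ Gv conjv (fun k => mkC 0 (t * lam k))); auto.
  - intros; apply resolution_id_adj; auto.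
  - intros; apply eig_itAadj; auto.
  - intros; apply cexp_partial_cv.
Qed.

Lemma exp_minus_itA_spec t m j : (m < N)%nat -> (j < N)%nat ->
  mexp N (mscale (mkC 0 (- t)) A) m j
  = csum N (fun k => Cmul (cis (- t * lam k)) (Cmul (vs k m) (dualv k j))).
Proof.
  intros. apply (mexp_spec N _ vs dualv (fun k => mkC 0 (- t * lam k))); auto.
  - intros; apply resolution_id; auto.
  - intros; apply eig_minus_itA; auto.
  - intros; apply cexp_partial_cv.
Qed.

Lemma integrand_spec t i j : (i < N)%nat -> (j < N)%nat ->
  integrand N G A B t i j
  = csum N (fun k => csum N (fun l => Cmul (cis (freq k l * t)) (coef i j k l))).
Proof.
  intros Hi Hj. unfold integrand, mmul at 1.
  set (GB := mmul N G B).
  assert (Hright : forall l, (l < N)%nat -> mmul N GB (mexp N (mscale (mkC 0 (- t)) A)) l j =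
     csum N (fun k' => Cmul (cis (- t * lam k')) (Cmul (dualv k' j) (mvec N GB (vs k') l)))).
  { intros l Hl. unfold mmul at 1.
    rewrite (csum_ext N _ (fun m => csum N (fun k' =>
      Cmul (Cmul (cis (- t * lam k')) (dualv k' j)) (Cmul (GB l m) (vs k' m))))).
    2:{ intros m Hm. rewrite exp_minus_itA_spec by auto. rewrite csum_mull.
        apply csum_ext; intros; cring. }
    rewrite csum_swap. apply csum_ext; intros k' Hk'. rewrite <- csum_mull. unfold mvec. cring. }
  rewrite (csum_ext N _ (fun l => csum N (fun k => csum N (fun k' =>
      Cmul (Cmul (cis (t * lam k)) (cis (- t * lam k')))
           (Cmul (Cmul (Gv k i) (dualv k' j)) (Cmul (conjv k l) (mvec N GB (vs k') l))))))).
  2:{ intros l Hl. rewrite exp_itAadj_spec, Hright by auto. rewrite csum_mulr.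
      apply csum_ext; intros k Hk. rewrite csum_mull. apply csum_ext; intros; cring. }
  rewrite csum_swap. apply csum_ext; intros k Hk.
  rewrite csum_swap. apply csum_ext; intros l Hl.
  unfold coef, bcoef, freq, ip, conjv.
  rewrite <- !csum_mull, cis_mul.
  replace (t * lam k + - t * lam l) with ((lam k - lam l) * t) by ring. unfold GB. cring.
Qed.

(* The resonant (time-independent) part: terms with λ_k = λ_l.  This is the limit L. *)
Definition resonant k l : C := if Req_EM_T (freq k l) 0 then C1 else C0.
Definition avg_limit : Mat :=
  fun i j => csum N (fun k => csum N (fun l => Cmul (resonant k l) (coef i j k l))).

Lemma re_integrand i j : (i < N)%nat -> (j < N)%nat ->
  (fun t => re (integrand N G A B t i j))
  = trig_poly N (fun k l => re (coef i j k l)) (fun k l => - im (coef i j k l)) freq.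
Proof.
  intros Hi Hj. apply functional_extensionality; intros t. rewrite integrand_spec by auto.
  rewrite re_csum. unfold trig_poly. apply rsum_ext; intros k Hk.
  rewrite re_csum. apply rsum_ext; intros l Hl. unfold trig. simpl. ring.
Qed.

Lemma im_integrand i j : (i < N)%nat -> (j < N)%nat ->
  (fun t => im (integrand N G A B t i j))
  = trig_poly N (fun k l => im (coef i j k l)) (fun k l => re (coef i j k l)) freq.
Proof.
  intros Hi Hj. apply functional_extensionality; intros t. rewrite integrand_spec by auto.
  rewrite im_csum. unfold trig_poly. apply rsum_ext; intros k Hk.
  rewrite im_csum. apply rsum_ext; intros l Hl. unfold trig. simpl. ring.
Qed.

Lemma re_avg_limit i j : re (avg_limit i j)
  = rsum N (fun k => rsum N (fun l => if Req_EM_T (freq k l) 0 then re (coef i j k l) else 0)).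
Proof.
  unfold avg_limit. rewrite re_csum. apply rsum_ext; intros k Hk.
  rewrite re_csum. apply rsum_ext; intros l Hl.
  unfold resonant. destruct (Req_EM_T (freq k l) 0); simpl; ring.
Qed.

Lemma im_avg_limit i j : im (avg_limit i j)
  = rsum N (fun k => rsum N (fun l => if Req_EM_T (freq k l) 0 then im (coef i j k l) else 0)).
Proof.
  unfold avg_limit. rewrite im_csum. apply rsum_ext; intros k Hk.
  rewrite im_csum. apply rsum_ext; intros l Hl.
  unfold resonant. destruct (Req_EM_T (freq k l) 0); simpl; ring.
Qed.

Definition decay_const (f : nat -> nat -> R) :=
  rsum N (fun k => rsum N (fun l =>
    if Req_EM_T (freq k l) 0 then 0 else Rabs (f k l) / Rabs (freq k l))).

Lemma decay_const_nonneg f : 0 <= decay_const f.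
Proof.
  apply rsum_nonneg; intros k Hk. apply rsum_nonneg; intros l Hl.
  destruct (Req_EM_T (freq k l) 0); [lra|]. apply Rmult_le_pos. apply Rabs_pos.
  apply Rlt_le, Rinv_0_lt_compat, Rabs_pos_lt; auto.
Qed.

Definition total_decay : R :=
  rsum N (fun i => rsum N (fun j =>
    decay_const (fun k l => re (coef i j k l)) + decay_const (fun k l => im (coef i j k l)))).

Lemma entry_decay_nonneg i j :
  0 <= decay_const (fun k l => re (coef i j k l)) + decay_const (fun k l => im (coef i j k l)).
Proof.
  pose proof (decay_const_nonneg (fun k l => re (coef i j k l))).
  pose proof (decay_const_nonneg (fun k l => im (coef i j k l))). lra.
Qed.

Lemma entry_decay_le i j : (i < N)%nat -> (j < N)%nat ->
  decay_const (fun k l => re (coef i j k l)) + decay_const (fun k l => im (coef i j k l))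
  <= total_decay.
Proof.
  intros Hi Hj.
  eapply Rle_trans; [apply (rsum_term_le N (fun j => _ + _) j Hj); intros; apply entry_decay_nonneg|].
  apply (rsum_term_le N (fun i => rsum N (fun j => _ + _)) i Hi).
  intros a Ha; apply rsum_nonneg; intros; apply entry_decay_nonneg.
Qed.

Lemma avg_limit_is_time_average : time_average_is N (integrand N G A B) avg_limit.
Proof.
  apply (time_average_of_rate N _ _ total_decay).
  - apply rsum_nonneg; intros i Hi; apply rsum_nonneg; intros; apply entry_decay_nonneg.
  - intros T HT i j Hi Hj. rewrite re_integrand, im_integrand by auto.
    split; constructor; apply trig_poly_int; auto.
  - intros T HT i j Hi Hj. pose proof (entry_decay_le i j Hi Hj) as Hle.
    pose proof (decay_const_nonneg (fun k l => re (coef i j k l))).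
    pose proof (decay_const_nonneg (fun k l => im (coef i j k l))).
    assert (Hdiv : forall x, x <= total_decay -> x / T <= total_decay / T).
    { intros x Hx. unfold Rdiv. apply Rmult_le_compat_r; auto. apply Rlt_le, Rinv_0_lt_compat; auto. }
    rewrite re_integrand, im_integrand, re_avg_limit, im_avg_limit by auto.
    split; (eapply Rle_trans; [apply trig_poly_avg_bound; auto| apply Hdiv; unfold decay_const in *; lra]).
Qed.

End TimeAverage.

(** * Positivity of the limit *)

(* r is the first index carrying the eigenvalue lam r; such indices represent the
   distinct eigenvalues. *)
Definition first_index (lam : nat -> R) (r : nat) : Prop := forall j, (j < r)%nat -> lam j <> lam r.
Definition is_first (lam : nat -> R) (r : nat) : C :=
  if excluded_middle_informative (first_index lam r) then C1 else C0.

Lemma first_index_exists lam k : exists r0, (r0 <= k)%nat /\ lam r0 = lam k /\ first_index lam r0.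
Proof.
  induction k as [k IH] using lt_wf_ind.
  destruct (classic (first_index lam k)) as [Hf|Hf].
  - exists k; auto.
  - unfold first_index in Hf. apply not_all_ex_not in Hf. destruct Hf as [j Hj].
    apply imply_to_and in Hj. destruct Hj as [Hjk Hj]. apply NNPP in Hj.
    destruct (IH j Hjk) as [r0 [H1 [H2 H3]]]. exists r0. split; [lia|]. split; auto. congruence.
Qed.

Lemma first_index_unique lam r r0 :
  first_index lam r -> first_index lam r0 -> lam r = lam r0 -> r = r0.
Proof.
  intros H1 H2 E. destruct (lt_eq_lt_dec r r0) as [[Hlt|]|Hlt]; auto.
  - exfalso; apply (H2 r Hlt E).
  - exfalso; apply (H1 r0 Hlt); auto.
Qed.

Lemma resonant_eq lam k l : lam k = lam l -> resonant lam k l = C1.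
Proof. intros E. unfold resonant, freq. destruct (Req_EM_T (lam k - lam l) 0); auto. exfalso; lra. Qed.

Lemma resonant_neq lam k l : lam k <> lam l -> resonant lam k l = C0.
Proof.
  intros E. unfold resonant, freq. destruct (Req_EM_T (lam k - lam l) 0); auto.
  exfalso; apply E; lra.
Qed.

Lemma resonant_cases lam k l :
  (lam k = lam l /\ resonant lam k l = C1) \/ (lam k <> lam l /\ resonant lam k l = C0).
Proof.
  destruct (Req_dec (lam k) (lam l));
    [left; split; auto; apply resonant_eq | right; split; auto; apply resonant_neq]; auto.
Qed.

Lemma Cconj_resonant lam k l : Cconj (resonant lam k l) = resonant lam k l.
Proof. destruct (resonant_cases lam k l) as [[_ ->]|[_ ->]]; cring. Qed.

(* [λ_k = λ_l] = Σ_{r first} [λ_r = λ_k][λ_r = λ_l]: the eigenvalue classes partition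
   the indices, each class having exactly one first index. *)
Lemma resonant_partition N lam k l : (k < N)%nat -> (l < N)%nat ->
  csum N (fun r => Cmul (is_first lam r) (Cmul (resonant lam r k) (resonant lam r l)))
  = resonant lam k l.
Proof.
  intros Hk Hl. destruct (Req_dec (lam k) (lam l)) as [E|E].
  - destruct (first_index_exists lam k) as [r0 [Hr0 [Er0 Fr0]]]. rewrite resonant_eq by auto.
    transitivity (csum N (fun r => Cmul (kron r0 r) C1)); [|apply (csum_kron N r0 (fun _ => C1)); lia].
    apply csum_ext; intros r Hr. unfold is_first.
    destruct (excluded_middle_informative (first_index lam r)) as [Fr|Fr].
    + destruct (Nat.eq_dec r0 r) as [<-|Hne].
      * rewrite kron_refl, !resonant_eq by congruence. cring.
      * rewrite kron_neq, (resonant_neq lam r k) by (auto; intro E2;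
          apply Hne, (first_index_unique lam); auto; congruence). cring.
    + destruct (Nat.eq_dec r0 r) as [<-|Hne]; [contradiction|]. rewrite kron_neq by auto. cring.
  - rewrite (resonant_neq lam k l) by auto. apply csum_zero; intros r Hr.
    destruct (resonant_cases lam r k) as [[E1 ->]|[E1 ->]]; [|cring].
    destruct (resonant_cases lam r l) as [[E2 ->]|[E2 ->]]; [|cring].
    exfalso; apply E; congruence.
Qed.

Definition delta (CA alpha beta : R) : R := beta / (1 + CA * CA / (alpha * alpha)).

Lemma delta_pos CA alpha beta : 0 < alpha -> 0 < beta -> 0 < delta CA alpha beta.
Proof.
  intros Ha Hb. unfold delta. apply Rdiv_lt_0_compat; auto.
  assert (0 <= CA * CA / (alpha * alpha)).
  { apply Rmult_le_pos; [nra|]. apply Rlt_le, Rinv_0_lt_compat; nra. }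
  lra.
Qed.

Lemma delta_bound CA alpha beta mu qG qB : 0 < alpha -> 0 <= qB -> Rabs mu <= CA ->
  beta * qG <= qB + / (alpha * alpha) * (mu * mu * qB) -> delta CA alpha beta * qG <= qB.
Proof.
  intros Ha HqB Hmu H.
  assert (Hmu2 : mu * mu <= CA * CA).
  { pose proof (Rabs_pos mu).
    assert (Rabs mu * Rabs mu = mu * mu) by (rewrite <- Rabs_mult; apply Rabs_right; nra).
    nra. }
  set (ia := / (alpha * alpha)) in *.
  assert (Hia : 0 < ia) by (apply Rinv_0_lt_compat; nra).
  assert (Hmain : beta * qG <= (1 + CA * CA * ia) * qB).
  { assert (mu * mu * ia * qB <= CA * CA * ia * qB)
      by (apply Rmult_le_compat_r; auto; apply Rmult_le_compat_r; lra).
    nra. }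
  unfold delta, Rdiv. fold ia.
  assert (Hd : 0 < 1 + CA * CA * ia) by nra.
  apply (Rmult_le_reg_l (1 + CA * CA * ia)); auto.
  replace ((1 + CA * CA * ia) * (beta * / (1 + CA * CA * ia) * qG)) with (beta * qG)
    by (field; lra).
  lra.
Qed.

Section Positivity.
Variables (N : nat) (G A B : Mat) (CA alpha beta : R).
Hypothesis HG : hpd N G.
Variables (vs : nat -> Vec) (lam : nat -> R).
Hypothesis Hon : orthonormal N G N vs.
Hypothesis Hev : forall j, (j < N)%nat -> eigvec N A (vs j) (lam j).

Definition coord (x : Vec) (k : nat) : C := ip N G (vs k) x.

Lemma coord_dual x k : csum N (fun j => Cmul (dualv N G vs k j) (x j)) = coord x k.
Proof.
  unfold dualv, Gv, coord. rewrite ip_dot. fold (dot N (mvec N G (vs k)) x).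
  rewrite <- dot_madj. apply dot_ext; auto. intros j Hj. apply mvec_mext. intros l Hl.
  symmetry; apply (proj1 HG); auto.
Qed.

Lemma coord_dual_conj x k : csum N (fun i => Cmul (Cconj (x i)) (Gv N G vs k i)) = Cconj (coord x k).
Proof. rewrite <- coord_dual, csum_conj. apply csum_ext; intros. unfold dualv, Gv. cring. Qed.

Lemma quad_avg_limit x : quad N (avg_limit N G B vs lam) x =
  csum N (fun k => csum N (fun l => Cmul (resonant lam k l)
    (Cmul (Cconj (coord x k)) (Cmul (bcoef N G B vs k l) (coord x l))))).
Proof.
  assert (Hm : forall i, mvec N (avg_limit N G B vs lam) x i =
     csum N (fun k => csum N (fun l =>
       Cmul (Cmul (resonant lam k l) (Cmul (Gv N G vs k i) (bcoef N G B vs k l))) (coord x l)))).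
  { intros i. unfold mvec, avg_limit.
    rewrite (csum_ext N _ (fun j => csum N (fun k => csum N (fun l =>
       Cmul (Cmul (resonant lam k l) (Cmul (Gv N G vs k i) (bcoef N G B vs k l)))
            (Cmul (dualv N G vs l j) (x j)))))).
    2:{ intros j Hj. rewrite csum_mulr. apply csum_ext; intros.
        rewrite csum_mulr. apply csum_ext; intros. unfold coef; cring. }
    rewrite csum_swap. apply csum_ext; intros k Hk. rewrite csum_swap. apply csum_ext; intros l Hl.
    rewrite <- csum_mull, coord_dual. reflexivity. }
  unfold quad. rewrite (csum_ext N _ (fun i => csum N (fun k => csum N (fun l =>
       Cmul (Cmul (resonant lam k l) (Cmul (bcoef N G B vs k l) (coord x l)))
            (Cmul (Cconj (x i)) (Gv N G vs k i)))))).
  2:{ intros i Hi. rewrite Hm, csum_mull. apply csum_ext; intros.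
      rewrite csum_mull. apply csum_ext; intros. cring. }
  rewrite csum_swap. apply csum_ext; intros k Hk. rewrite csum_swap. apply csum_ext; intros l Hl.
  rewrite <- csum_mull, coord_dual_conj. cring.
Qed.

Lemma parseval x : quad N G x = csum N (fun k => Cmul (Cconj (coord x k)) (coord x k)).
Proof.
  rewrite quad_ip.
  rewrite (ip_ext N G x x x (fun i => csum N (fun k => Cmul (coord x k) (vs k i)))); auto.
  2:{ intros i Hi. rewrite (orthonormal_expansion N G HG vs Hon x i Hi).
      apply csum_ext; intros; unfold coord; cring. }
  rewrite ip_csum_r. apply csum_ext; intros k Hk. unfold coord.
  rewrite <- (herm_ip_conj N G (vs k) x (proj1 HG)). cring.
Qed.

(* The component P_r x of x in the eigenspace of λ_r. *)
Definition eigcomp (x : Vec) (r : nat) : Vec :=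
  fun i => csum N (fun l => Cmul (Cmul (resonant lam r l) (coord x l)) (vs l i)).

Lemma eigcomp_eig x r : eigvec N A (eigcomp x r) (lam r).
Proof.
  intros i Hi. unfold eigcomp. rewrite mvec_csum, csum_mull. apply csum_ext; intros l Hl.
  rewrite Hev by auto. destruct (resonant_cases lam r l) as [[E ->]|[E ->]]; [rewrite E|]; cring.
Qed.

Lemma resonant_sum_by_eigenvalue (M : Mat) (w : nat -> nat -> C) x :
  (forall k l, (k < N)%nat -> (l < N)%nat -> w k l = ip N M (vs k) (vs l)) ->
  csum N (fun k => csum N (fun l =>
    Cmul (resonant lam k l) (Cmul (Cconj (coord x k)) (Cmul (w k l) (coord x l))))) =
  csum N (fun r => Cmul (is_first lam r) (quad N M (eigcomp x r))).
Proof.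
  intros Hw. set (term := fun r k l => Cmul (is_first lam r)
     (Cmul (Cmul (Cconj (Cmul (resonant lam r k) (coord x k))) (Cmul (resonant lam r l) (coord x l)))
           (ip N M (vs k) (vs l)))).
  rewrite (csum_ext N _ (fun k => csum N (fun r => csum N (fun l => term r k l)))).
  2:{ intros k Hk. rewrite csum_swap. apply csum_ext; intros l Hl.
      rewrite <- (resonant_partition N lam k l), csum_mulr, Hw by auto.
      apply csum_ext; intros r Hr. unfold term. rewrite Cconj_mul, Cconj_resonant. cring. }
  rewrite csum_swap. apply csum_ext; intros r Hr.
  unfold eigcomp. rewrite quad_expand, csum_mull.
  apply csum_ext; intros k Hk. rewrite csum_mull. reflexivity.
Qed.

Lemma quad_avg_limit_by_eigenvalue x : quad N (avg_limit N G B vs lam) x =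
  csum N (fun r => Cmul (is_first lam r) (quad N (mmul N G B) (eigcomp x r))).
Proof. rewrite quad_avg_limit. apply resonant_sum_by_eigenvalue. reflexivity. Qed.

Lemma quad_G_by_eigenvalue x : quad N G x =
  csum N (fun r => Cmul (is_first lam r) (quad N G (eigcomp x r))).
Proof.
  rewrite parseval, <- (resonant_sum_by_eigenvalue G kron)
    by (intros k l Hk Hl; symmetry; apply Hon; auto).
  apply csum_ext; intros k Hk.
  rewrite (csum_ext N _ (fun l => Cmul (kron k l)
             ((fun l => Cmul (resonant lam k l) (Cmul (Cconj (coord x k)) (coord x l))) l)))
    by (intros; cring).
  rewrite csum_kron, resonant_eq by auto. cring.
Qed.

Hypothesis HGB : psd N (mmul N G B).

Lemma avg_limit_herm : hermitian N (avg_limit N G B vs lam).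
Proof.
  intros i j Hi Hj. unfold avg_limit, madj. rewrite csum_conj, csum_swap.
  apply csum_ext; intros k Hk. rewrite csum_conj. apply csum_ext; intros l Hl.
  assert (Eb : Cconj (bcoef N G B vs k l) = bcoef N G B vs l k)
    by (apply herm_ip_conj, (proj1 HGB)).
  unfold coef. rewrite !Cconj_mul, Cconj_resonant, Eb. unfold dualv.
  rewrite Cconj_conj.
  destruct (resonant_cases lam k l) as [[E ->]|[E ->]].
  - rewrite resonant_eq by auto. cring.
  - rewrite resonant_neq by auto. cring.
Qed.

Hypothesis Hlam : forall j, (j < N)%nat -> Rabs (lam j) <= CA.
Hypothesis Halpha : 0 < alpha.
Hypothesis Hhyp : mge N (madd (mmul N G B)
                (mscale (RtoC (/ (alpha ^ 2)))
                        (mmul N (mmul N (mmul N (madj A) G) B) A)))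
          (mscale (RtoC beta) G).

Lemma eigcomp_bound x r : (r < N)%nat ->
  delta CA alpha beta * re (quad N G (eigcomp x r)) <= re (quad N (mmul N G B) (eigcomp x r)).
Proof.
  intros Hr. set (y := eigcomp x r).
  apply (delta_bound CA alpha beta (lam r)); auto; [apply (proj2 HGB)|].
  pose proof (proj2 Hhyp y) as H. rewrite quad_msub, quad_madd in H. simpl in H.
  rewrite !re_quad_mscale, quad_sandwich in H.
  rewrite (quad_vext N _ (mvec N A y) (vscale (RtoC (lam r)) y)), quad_vscale in H
    by (intros; apply eigcomp_eig; auto).
  replace (alpha * (alpha * 1)) with (alpha * alpha) in H by ring. lra.
Qed.

Lemma avg_limit_lower_bound :
  mge N (avg_limit N G B vs lam) (mscale (RtoC (delta CA alpha beta)) G).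
Proof.
  split.
  - intros i j Hi Hj. unfold msub, madj, mscale. rewrite (avg_limit_herm i j Hi Hj).
    rewrite ((proj1 HG) i j Hi Hj). unfold madj. cring.
  - intros x. rewrite quad_msub. simpl. rewrite re_quad_mscale, (herm_quad_real N G x (proj1 HG)).
    rewrite quad_avg_limit_by_eigenvalue, quad_G_by_eigenvalue, !re_csum, <- rsum_scal.
    enough (rsum N (fun r =>
              delta CA alpha beta * re (Cmul (is_first lam r) (quad N G (eigcomp x r))))
            <= rsum N (fun r => re (Cmul (is_first lam r) (quad N (mmul N G B) (eigcomp x r)))))
      by lra.
    apply rsum_le; intros r Hr. pose proof (eigcomp_bound x r Hr).
    unfold is_first. destruct (excluded_middle_informative (first_index lam r)); simpl; lra.
Qed.

End Positivity.

Theorem lemma5p2 :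
  forall (alpha beta CA CB : R), 0 < alpha -> 0 < beta ->
  exists delta : R, 0 < delta /\
  forall (N : nat) (G A B : Mat),
    hpd N G ->
    meq N (mmul N G A) (mmul N (madj A) G) ->
    meq N (mmul N G B) (mmul N (madj B) G) ->
    psd N (mmul N G B) ->
    Gopnorm_le N G A CA ->
    Gopnorm_le N G B CB ->
    mge N (madd (mmul N G B)
                (mscale (RtoC (/ (alpha ^ 2)))
                        (mmul N (mmul N (mmul N (madj A) G) B) A)))
          (mscale (RtoC beta) G) ->
    exists L : Mat,
      time_average_is N (integrand N G A B) L /\
      mge N L (mscale (RtoC delta) G).
Proof.
  intros alpha beta CA CB Ha Hb. exists (delta CA alpha beta). split; [apply delta_pos; auto|].
  intros N G A B HG HA _ HGB HnA _ Hhyp.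
  destruct (G_orthonormal_eigenbasis N G A CA HG HA HnA) as [vs [lam [Hon [Hev Hlam]]]].
  exists (avg_limit N G B vs lam). split.
  - apply avg_limit_is_time_average; auto.
  - apply (avg_limit_lower_bound N G A B CA alpha beta); auto.
Qed.
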